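(* Let $k\in\{1,2,\dots\}\cup\{\infty\}$. Every $C^k$-structure on the line with two origins $\mathbb{L}$ is represented by some orientable minimal atlas.
   Context: $\mathbb{L}=\mathbb{R}\sqcup\{0'\}$ has as open sets the open subsets of $\mathbb{R}$ and the sets $(W\setminus\{0\})\cup\{0'\}$ with $W\subset\mathbb{R}$ open, $0\in W$. Put $U=\mathbb{L}\setminus\{0'\}=\mathbb{R}$, $V=\mathbb{L}\setminus\{0\}$. Charts (homeomorphisms of open subsets of $\mathbb{L}$ onto open subsets of $\mathbb{R}$), $C^k$-compatibility, $C^k$-atlases and $C^k$-structures (equivalence classes of atlases whose union is again a $C^k$-atlas) are defined as for manifolds; an atlas represents a structure if it belongs to it. A minimal atlas is a $C^k$-atlas $\{(U,\varphi),(V,\psi)\}$ where $\varphi\colon U\to\mathbb{R}$, $\psi\colon V\to\mathbb{R}$ are homeomorphisms onto $\mathbb{R}$ with $\varphi(0)=\psi(0')=0$. It is orientable if its transition map $\psi\circ\varphi^{-1}\colon\mathbb{R}\setminus\{0\}\to\mathbb{R}\setminus\{0\}$ preserves orientation (has positive derivative everywhere). *)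

From Stdlib Require Import Reals.
From Coquelicot Require Import Coquelicot.
Open Scope R_scope.

(** The line with two origins: points of R plus an extra origin [o']. *)
Inductive L : Type := pt (x : R) | o'.

(** Topology of L: A is open iff its trace on the copy U = R (points pt x)
    is open in R, and its trace on V = (R \ {0}) u {0'} (identified with R
    via 0' |-> 0) is open in R. *)
Definition openL (A : L -> Prop) : Prop :=
  open (fun x : R => A (pt x)) /\
  open (fun x : R => (x = 0 /\ A o') \/ (x <> 0 /\ A (pt x))).

(** A (candidate) chart: a domain in L and a map L -> R (only its values on
    the domain matter). *)
Record chart := mkchart { cdom : L -> Prop; cmap : L -> R }.

Definition cimage (f : L -> R) (A : L -> Prop) (y : R) : Prop :=
  exists p, A p /\ f p = y.

Definition is_chart (c : chart) : Prop :=
  openL (cdom c) /\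
  (forall p q, cdom c p -> cdom c q -> cmap c p = cmap c q -> p = q) /\
  open (cimage (cmap c) (cdom c)) /\
  (forall W : R -> Prop, open W -> openL (fun p => cdom c p /\ W (cmap c p))) /\
  (forall A : L -> Prop, openL A -> (forall p, A p -> cdom c p) ->
      open (cimage (cmap c) A)).

Inductive smoothness := fin (n : nat) | infty.

Definition Ck_on (k : smoothness) (g : R -> R) (U : R -> Prop) : Prop :=
  match k with
  | fin n =>
      (forall m, (m < n)%nat -> forall x, U x -> ex_derive (Derive_n g m) x) /\
      (forall x, U x -> continuous (Derive_n g n) x)
  | infty => forall m x, U x -> ex_derive (Derive_n g m) x
  end.

Definition trans_Ck (k : smoothness) (c1 c2 : chart) : Prop :=
  exists g : R -> R,
    (forall p, cdom c1 p -> cdom c2 p -> g (cmap c1 p) = cmap c2 p) /\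
    Ck_on k g (cimage (cmap c1) (fun p => cdom c1 p /\ cdom c2 p)).

Definition Ck_compatible (k : smoothness) (c1 c2 : chart) : Prop :=
  trans_Ck k c1 c2 /\ trans_Ck k c2 c1.

Definition Ck_atlas (k : smoothness) (A : chart -> Prop) : Prop :=
  (forall c, A c -> is_chart c) /\
  (forall p, exists c, A c /\ cdom c p) /\
  (forall c1 c2, A c1 -> A c2 -> Ck_compatible k c1 c2).

Definition atlas_union (A B : chart -> Prop) (c : chart) : Prop := A c \/ B c.

Definition Ck_structure (k : smoothness) (S : (chart -> Prop) -> Prop) : Prop :=
  exists A, Ck_atlas k A /\
    forall B, S B <-> (Ck_atlas k B /\ Ck_atlas k (atlas_union A B)).

Definition U_L (p : L) : Prop := p <> o'.
Definition V_L (p : L) : Prop := p <> pt 0.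

Definition two_charts (phi psi : L -> R) (c : chart) : Prop :=
  c = mkchart U_L phi \/ c = mkchart V_L psi.

Definition minimal_atlas (k : smoothness) (phi psi : L -> R) : Prop :=
  Ck_atlas k (two_charts phi psi) /\
  (forall y, cimage phi U_L y) /\ (forall y, cimage psi V_L y) /\
  phi (pt 0) = 0 /\ psi o' = 0.

Definition orientable (phi psi : L -> R) : Prop :=
  exists g : R -> R,
    (forall p, U_L p -> V_L p -> g (phi p) = psi p) /\
    (forall y, y <> 0 -> exists d, is_derive g y d /\ 0 < d).

From Stdlib Require Import Reals Lra Lia Factorial ClassicalEpsilon Classical.
From Coquelicot Require Import Coquelicot.
Open Scope R_scope.

(** The traces of a C^k-atlas of [L] on the two copies [U] and [V] of [R] are
    C^k-atlases of [R], and for [k >= 1] every C^k-atlas of [R] has a global,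
    increasing, surjective compatible chart.  Near each point there is an
    increasing compatible chart on an interval; two such charts on overlapping
    intervals are glued by bending one into a translate of the other along a
    smooth ramp, which works because their transition map has positive
    derivative.  A supremum argument then gives charts on arbitrarily large
    intervals, and a nested sequence of them has a global limit.  Global charts
    [hU] of [U] and [hV] of [V] with [hU 0 = hV 0 = 0] form a minimal atlas
    compatible with the given one; it is orientable since the transition between
    two increasing charts has positive derivative. *)

(** * Increasing functions of a real variable *)

Definition image (f : R -> R) (S : R -> Prop) (y : R) : Prop := exists x, S x /\ f x = y.

Definition incr_on (S : R -> Prop) (f : R -> R) : Prop :=
  forall x y, S x -> S y -> x < y -> f x < f y.

Definition is_interval (K : R -> Prop) : Prop :=
  forall x y z, K x -> K z -> x <= y -> y <= z -> K y.

Lemma open_Rabs (D : R -> Prop) :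
  open D <-> forall x, D x -> exists e, 0 < e /\ forall y, Rabs (y - x) < e -> D y.
Proof.
  split.
  - intros H x Hx. destruct (H x Hx) as [eps Heps].
    exists eps; split; [apply cond_pos | intros y Hy; apply Heps, Hy].
  - intros H x Hx. destruct (H x Hx) as [e [He H']].
    exists (mkposreal e He). intros y Hy; apply H', Hy.
Qed.

Lemma open_ext (D D' : R -> Prop) : (forall x, D x <-> D' x) -> open D -> open D'.
Proof.
  intros He H x Hx. apply He in Hx.
  apply (filter_imp D); [intros; apply He; auto | apply H; auto].
Qed.

Lemma open_neq0 : open (fun x : R => x <> 0).
Proof.
  apply (open_ext (fun x => x < 0 \/ 0 < x)); [intro x; split; intro; lra|].
  apply open_or; [apply open_lt | apply open_gt].
Qed.

Definition itv (a b x : R) : Prop := a < x < b.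

Lemma open_itv a b : open (itv a b).
Proof. apply open_and; [apply open_gt | apply open_lt]. Qed.

Lemma is_derive_continuous (f : R -> R) x l : is_derive f x l -> continuous f x.
Proof. intro H. apply (ex_derive_continuous (V := R_NormedModule)). exists l; exact H. Qed.

Lemma IVT_le f a b y : a <= b -> (forall x, a <= x <= b -> continuous f x) ->
  f a <= y <= f b -> exists x, a <= x <= b /\ f x = y.
Proof.
  intros Hab Hc Hy.
  destruct (Req_dec (f a) y) as [E|E]; [exists a; split; [lra | auto]|].
  destruct (Req_dec (f b) y) as [E'|E']; [exists b; split; [lra | auto]|].
  destruct (Ranalysis5.IVT_interv (fun x => f x - y) a b) as [z [Hz Hz']]; try lra.
  - intros t Ht. apply (continuity_pt_minus f (fun _ => y)).
    + apply continuity_pt_filterlim, Hc; auto.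
    + apply continuity_pt_const. intros u v; reflexivity.
  - destruct (Rle_lt_or_eq_dec _ _ Hab) as [|<-]; lra.
  - exists z; split; auto; lra.
Qed.

Lemma incr_of_inj_continuous f a b : a < b -> (forall x, a <= x <= b -> continuous f x) ->
  (forall x y, a <= x <= b -> a <= y <= b -> f x = f y -> x = y) -> f a < f b ->
  forall x y, a <= x -> x < y -> y <= b -> f x < f y.
Proof.
  intros Hab Hc Hi Hf x y Hx Hxy Hy.
  destruct (Rlt_or_le (f x) (f y)) as [|Hle]; auto. exfalso.
  assert (Hne : f y < f x) by (destruct Hle as [|E]; [auto | apply Hi in E; lra]).
  (* The moving points [X t] and [Y t] would then collide for some [t] in [[0, 1]]. *)
  set (X := fun t => a + (x - a) * t). set (Y := fun t => b + (y - b) * t).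
  assert (HX : forall t, 0 <= t <= 1 -> a <= X t <= b) by (intros; unfold X; split; nra).
  assert (HY : forall t, 0 <= t <= 1 -> a <= Y t <= b) by (intros; unfold Y; split; nra).
  assert (Haff : forall p q t, continuous (fun s => p + q * s) t).
  { intros. apply (ex_derive_continuous (V := R_NormedModule)). auto_derive; auto. }
  destruct (IVT_le (fun t => f (X t) - f (Y t)) 0 1 0) as [t [Ht E]]; try lra.
  - intros t Ht. apply (continuous_minus (V := R_NormedModule));
      (apply continuous_comp; [apply Haff | apply Hc; auto]).
  - unfold X, Y. rewrite !Rmult_0_r, !Rmult_1_r, !Rplus_0_r.
    replace (a + (x - a)) with x by ring. replace (b + (y - b)) with y by ring. lra.
  - assert (X t = Y t) by (apply Hi; auto; simpl in E; lra).
    unfold X, Y in H. nra.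
Qed.

Lemma incr_on_inj S f : incr_on S f -> forall a b, S a -> S b -> f a = f b -> a = b.
Proof.
  intros H a b Ha Hb E. destruct (Rtotal_order a b) as [h|[h|h]]; auto.
  - specialize (H a b Ha Hb h); lra.
  - specialize (H b a Hb Ha h); lra.
Qed.

Lemma incr_on_image_open (I : R -> Prop) f : (forall x, I x -> continuous f x) -> incr_on I f ->
  forall O : R -> Prop, (forall x, O x -> I x) -> open O -> open (image f O).
Proof.
  intros Hc Hi O HO Ho. apply open_Rabs. intros y [x0 [Hx0 <-]].
  destruct (proj1 (open_Rabs O) Ho x0 Hx0) as [e [He Hb]].
  set (a := x0 - e/2). set (b := x0 + e/2).
  assert (Hab : forall t, a <= t <= b -> O t) by (intros; apply Hb, Rabs_def1; unfold a, b in *; lra).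
  assert (f a < f x0) by (apply Hi; try apply HO, Hab; unfold a, b; lra).
  assert (f x0 < f b) by (apply Hi; try apply HO, Hab; unfold a, b; lra).
  exists (Rmin (f x0 - f a) (f b - f x0)). split; [apply Rmin_glb_lt; lra|].
  intros z Hz. apply Rabs_def2 in Hz.
  pose proof (Rmin_l (f x0 - f a) (f b - f x0)). pose proof (Rmin_r (f x0 - f a) (f b - f x0)).
  destruct (IVT_le f a b z) as [x [Hx E]]; try (unfold a, b; lra); try lra.
  - intros; apply Hc, HO, Hab; auto.
  - exists x; split; auto.
Qed.

Lemma incr_on_of_Derive_pos (K : R -> Prop) w : is_interval K ->
  (forall y, K y -> is_derive w y (Derive w y)) -> (forall y, K y -> 0 < Derive w y) ->
  incr_on K w.
Proof.
  intros HK Hd Hp x y Hx Hy Hxy.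
  apply (incr_function_le w x y (Derive w)); simpl; try lra;
    intros z H1 H2; [apply Hd | apply Hp]; apply (HK x z y); auto.
Qed.

Lemma nondecr_Derive_nonneg (J : R -> Prop) u y l : open J -> J y ->
  (forall x z, J x -> J z -> x <= z -> u x <= u z) -> is_derive u y l -> 0 <= l.
Proof.
  intros HJ Hy Hi Hd. destruct (Rle_or_lt 0 l) as [|Hl]; auto. exfalso.
  apply is_derive_Reals in Hd. destruct (Hd (- l / 2)) as [del Hdel]; [lra|].
  destruct (proj1 (open_Rabs J) HJ y Hy) as [e [He Hb]].
  set (h := Rmin del e / 2).
  pose proof (Rmin_l del e). pose proof (Rmin_r del e). pose proof (cond_pos del).
  assert (Hh : 0 < h < del /\ h < e).
  { assert (0 < Rmin del e) by (apply Rmin_glb_lt; lra). unfold h; lra. }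
  specialize (Hdel h ltac:(lra)). rewrite Rabs_right in Hdel by lra. specialize (Hdel ltac:(lra)).
  assert (u y <= u (y + h)) by (apply Hi; auto; [apply Hb; rewrite Rabs_right|]; lra).
  apply Rabs_def2 in Hdel.
  assert (0 <= (u (y + h) - u y) / h) by (apply Rdiv_le_0_compat; lra). lra.
Qed.

(* The chain rule applied to [v o u = id] forces [Derive u y <> 0]. *)
Lemma incr_on_Derive_pos (W : R -> Prop) u v y :
  open W -> W y -> incr_on W u -> is_derive u y (Derive u y) ->
  is_derive v (u y) (Derive v (u y)) -> (forall z, W z -> v (u z) = z) -> 0 < Derive u y.
Proof.
  intros HW Hy Iu Hu Hv Hinv.
  assert (H0 : 0 <= Derive u y).
  { apply (nondecr_Derive_nonneg W u y _ HW Hy); auto.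
    intros x z Hx Hz [Hxz | ->]; [left; apply Iu | right]; auto. }
  assert (Hid : is_derive (fun z => v (u z)) y 1).
  { apply (is_derive_ext_loc (fun z => z)); [|apply (is_derive_id (K := R_AbsRing))].
    apply (filter_imp W); [intros; symmetry; auto | apply HW; auto]. }
  assert (E : Derive u y * Derive v (u y) = 1).
  { rewrite <- (is_derive_unique _ _ _ Hid).
    symmetry; apply is_derive_unique, (is_derive_comp v u y _ _ Hv Hu). }
  destruct H0 as [|H0]; auto. rewrite <- H0 in E. lra.
Qed.

Definition inv_on (S : R -> Prop) (f : R -> R) (y : R) : R :=
  match excluded_middle_informative (exists x, S x /\ f x = y) with
  | left H => proj1_sig (constructive_indefinite_description _ H)
  | right _ => 0
  end.

Lemma inv_on_spec S f y : image f S y -> S (inv_on S f y) /\ f (inv_on S f y) = y.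
Proof.
  intro H. unfold inv_on. destruct excluded_middle_informative as [H'|H']; [|contradiction].
  exact (proj2_sig (constructive_indefinite_description _ H')).
Qed.

Lemma inv_on_eq S f x : (forall a b, S a -> S b -> f a = f b -> a = b) -> S x ->
  inv_on S f (f x) = x.
Proof.
  intros Hi Hx. destruct (inv_on_spec S f (f x)) as [H1 H2]; [exists x; auto|]. apply Hi; auto.
Qed.

Lemma inv_on_local (I : R -> Prop) f y : open I -> (forall x, I x -> continuous f x) ->
  incr_on I f -> image f I y ->
  exists lb ub, lb < inv_on I f y < ub /\ (forall t, lb <= t <= ub -> I t) /\
    (forall z, f lb <= z <= f ub -> lb <= inv_on I f z <= ub /\ f (inv_on I f z) = z) /\
    f lb < y < f ub.
Proof.
  intros HI Hc Hi [x0 [Hx0 <-]]. rewrite (inv_on_eq I f x0 (incr_on_inj I f Hi)); auto.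
  destruct (proj1 (open_Rabs I) HI x0 Hx0) as [e [He Hb]].
  exists (x0 - e/2), (x0 + e/2).
  assert (Hs : forall t, x0 - e/2 <= t <= x0 + e/2 -> I t) by (intros; apply Hb, Rabs_def1; lra).
  split; [lra|]. split; auto. split.
  - intros z Hz. destruct (IVT_le f (x0 - e/2) (x0 + e/2) z) as [x [Hx <-]]; try lra.
    + intros; apply Hc, Hs; auto.
    + rewrite (inv_on_eq I f x (incr_on_inj I f Hi)); auto.
  - split; apply Hi; auto; try apply Hs; lra.
Qed.

Lemma inv_on_continuous (I : R -> Prop) f y : open I -> (forall x, I x -> continuous f x) ->
  incr_on I f -> image f I y -> continuous (inv_on I f) y.
Proof.
  intros HI Hc Hi Hy. destruct (inv_on_local I f y HI Hc Hi Hy) as [lb [ub [H1 [H2 [H3 H4]]]]].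
  apply continuity_pt_filterlim.
  apply (Ranalysis5.continuity_pt_recip_interv f (inv_on I f) lb ub); auto; try lra.
  - intros; apply Hi; try apply H2; lra.
  - intros; unfold comp, id; apply H3; lra.
  - intros; apply H3; lra.
  - intros; apply continuity_pt_filterlim, Hc, H2; auto.
Qed.

Lemma inv_on_is_derive (I : R -> Prop) f f1 y : open I -> (forall x, I x -> continuous f x) ->
  incr_on I f -> (forall x, I x -> is_derive f x (f1 x)) -> (forall x, I x -> f1 x <> 0) ->
  image f I y -> is_derive (inv_on I f) y (/ f1 (inv_on I f y)).
Proof.
  intros HI Hc Hi Hd Hn Hy. set (g := inv_on I f).
  destruct (inv_on_local I f y HI Hc Hi Hy) as [lb [ub [H1 [H2 [H3 H4]]]]]. fold g in H1, H3.
  assert (Eg1 : g (f lb) = lb) by (apply inv_on_eq; [apply incr_on_inj; auto | apply H2; lra]).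
  assert (Eg2 : g (f ub) = ub) by (apply inv_on_eq; [apply incr_on_inj; auto | apply H2; lra]).
  assert (Prf : forall a, g (f lb) <= a <= g (f ub) -> derivable_pt f a).
  { intros a Ha. exists (f1 a). apply is_derive_Reals, Hd, H2. lra. }
  assert (Hgy : g (f lb) <= g y <= g (f ub)) by lra.
  assert (Hdp : derive_pt f (g y) (Prf (g y) Hgy) = f1 (g y)).
  { apply derive_pt_eq_0, is_derive_Reals, Hd, H2. lra. }
  assert (Hn' : f1 (g y) <> 0) by (apply Hn, H2; lra).
  apply is_derive_Reals.
  replace (/ f1 (g y)) with (1 / derive_pt f (g y) (Prf (g y) Hgy)) by (rewrite Hdp; field; auto).
  apply (Ranalysis5.derivable_pt_lim_recip_interv f g (f lb) (f ub) y Prf); try lra.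
  - apply continuity_pt_filterlim, inv_on_continuous; auto.
  - intros; unfold comp, id; apply H3; lra.
Qed.

(** * C^k functions *)

(* Unlike [Ck_on], the successive derivatives are explicit witnesses, which makes
   closure under composition and inversion straightforward. *)
Fixpoint Cn (n : nat) (g : R -> R) (W : R -> Prop) : Prop :=
  match n with
  | O => forall x, W x -> continuous g x
  | S n => exists g', (forall x, W x -> is_derive g x (g' x)) /\ Cn n g' W
  end.

Lemma Cn_S n g W : Cn (S n) g W -> Cn n g W.
Proof.
  revert g; induction n; intros g [g' [H1 H2]].
  - intros x Hx. eapply is_derive_continuous; eauto.
  - exists g'; split; auto.
Qed.

Lemma Cn_le n m g W : (m <= n)%nat -> Cn n g W -> Cn m g W.
Proof. induction 1; auto. intro; apply IHle, Cn_S; auto. Qed.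

Lemma Cn_ext n g1 g2 W : open W -> (forall x, W x -> g1 x = g2 x) -> Cn n g1 W -> Cn n g2 W.
Proof.
  intros HW He. assert (Hl : forall x, W x -> locally x (fun t => g1 t = g2 t))
    by (intros x Hx; apply (filter_imp W); auto).
  destruct n; simpl.
  - intros H x Hx. apply (continuous_ext_loc _ g1); auto.
  - intros [g' [H1 H2]]; exists g'; split; auto.
    intros x Hx; apply (is_derive_ext_loc g1); auto.
Qed.

Lemma Cn_const n c W : Cn n (fun _ => c) W.
Proof.
  revert c; induction n; intro c; simpl; [intros; apply continuous_const|].
  exists (fun _ => 0); split; [|apply IHn].
  intros x _; exact (is_derive_const (V := R_NormedModule) c x).
Qed.

Lemma Cn_id n W : Cn n (fun y => y) W.
Proof.
  destruct n; simpl; [intros; apply continuous_id|].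
  exists (fun _ => 1); split; [intros x _; exact (is_derive_id (K := R_AbsRing) x) | apply Cn_const].
Qed.

Lemma Cn_plus n f g W : Cn n f W -> Cn n g W -> Cn n (fun y => f y + g y) W.
Proof.
  revert f g; induction n; simpl; intros f g Hf Hg.
  - intros; apply (continuous_plus (V := R_NormedModule)); auto.
  - destruct Hf as [f' [F1 F2]], Hg as [g' [G1 G2]].
    exists (fun y => f' y + g' y); split; auto.
    intros; apply (is_derive_plus (V := R_NormedModule)); auto.
Qed.

Lemma Cn_mult n f g W : Cn n f W -> Cn n g W -> Cn n (fun y => f y * g y) W.
Proof.
  revert f g; induction n; intros f g Hf Hg.
  - simpl in *; intros; apply (continuous_mult (K := R_AbsRing)); auto.
  - pose proof (Cn_S _ _ _ Hf) as Hf0. pose proof (Cn_S _ _ _ Hg) as Hg0.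
    destruct Hf as [f' [F1 F2]], Hg as [g' [G1 G2]].
    exists (fun y => f' y * g y + f y * g' y); split.
    + intros x Hx. exact (is_derive_mult f g x _ _ (F1 x Hx) (G1 x Hx) Rmult_comm).
    + apply Cn_plus; apply IHn; auto.
Qed.

Lemma Cn_comp n f g (A B : R -> Prop) : (forall x, A x -> B (g x)) ->
  Cn n g A -> Cn n f B -> Cn n (fun x => f (g x)) A.
Proof.
  revert f g; induction n; intros f g HAB Hg Hf.
  - simpl in *; intros x Hx. apply continuous_comp; auto.
  - pose proof (Cn_S _ _ _ Hg) as Hg0.
    destruct Hf as [f' [F1 F2]], Hg as [g' [G1 G2]].
    exists (fun x => g' x * f' (g x)); split.
    + intros x Hx. exact (is_derive_comp f g x _ _ (F1 _ (HAB x Hx)) (G1 x Hx)).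
    + apply Cn_mult; [exact G2 | apply (IHn f' g); auto].
Qed.

Lemma Cn_Rinv n : Cn n Rinv (fun y => y <> 0).
Proof.
  assert (D : forall x, x <> 0 -> is_derive Rinv x (- 1 * (/ x * / x))).
  { intros x Hx. auto_derive; auto. field; auto. }
  induction n; simpl.
  - intros x Hx. exact (is_derive_continuous _ _ _ (D x Hx)).
  - exists (fun y => - 1 * (/ y * / y)); split; auto.
    apply Cn_mult; [apply Cn_const | apply Cn_mult; auto].
Qed.

Lemma Cn_inv n a W : Cn n a W -> (forall x, W x -> a x <> 0) -> Cn n (fun x => / a x) W.
Proof. intros. apply (Cn_comp n Rinv a W (fun y => y <> 0)); auto. apply Cn_Rinv. Qed.

(* [(w^-1)' = / (w1 o w^-1)] is one degree smoother than [w1]. *)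
Lemma Cn_inv_on n K w w1 : open K -> incr_on K w ->
  (forall x, K x -> is_derive w x (w1 x)) -> (forall x, K x -> 0 < w1 x) -> Cn n w1 K ->
  Cn (S n) (inv_on K w) (image w K).
Proof.
  intros HK Hi Hd Hp.
  assert (Hc : forall x, K x -> continuous w x) by (intros; eapply is_derive_continuous; eauto).
  assert (Hg : forall y, image w K y -> K (inv_on K w y)) by (intros; apply inv_on_spec; auto).
  assert (Hder : forall y, image w K y -> is_derive (inv_on K w) y (/ w1 (inv_on K w y))).
  { intros; apply inv_on_is_derive; auto. intros x Hx; specialize (Hp x Hx); lra. }
  assert (Hnz : forall y, image w K y -> w1 (inv_on K w y) <> 0)
    by (intros y Hy; specialize (Hp _ (Hg y Hy)); lra).
  induction n; intros Hw1; exists (fun y => / w1 (inv_on K w y)); split; auto;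
    apply Cn_inv; auto; apply (Cn_comp _ w1 (inv_on K w) _ K); auto.
  - simpl; intros; apply inv_on_continuous; auto.
  - apply IHn, Cn_S; auto.
Qed.

Definition Ck (k : smoothness) (g : R -> R) (W : R -> Prop) : Prop :=
  match k with fin n => Cn n g W | infty => forall n, Cn n g W end.

Lemma Derive_n_S g m x : Derive_n g (S m) x = Derive_n (Derive g) m x.
Proof.
  change (Derive (Derive_n g m) x = Derive_n (Derive_n g 1) m x).
  rewrite Derive_n_comp. replace (m + 1)%nat with (S m) by lia. reflexivity.
Qed.

Lemma Ck_on_fin_Cn n g W : open W -> (Ck_on (fin n) g W <-> Cn n g W).
Proof.
  revert g; induction n; intros g HW; split; simpl.
  - intros [_ H]; exact H.
  - intros H; split; [intros; lia | exact H].
  - intros [H1 H2]. exists (Derive g); split.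
    + intros x Hx. apply Derive_correct, (H1 0%nat); auto; lia.
    + apply IHn; auto. split.
      * intros m Hm x Hx. apply (ex_derive_ext (Derive_n g (S m))); [intros; apply Derive_n_S|].
        apply H1; auto; lia.
      * intros x Hx. apply (continuous_ext (Derive_n g (S n))); [intros; apply Derive_n_S|].
        apply H2; auto.
  - intros [g' [H1 H2]]. apply IHn in H2; auto. destruct H2 as [H2 H3].
    assert (Hl : forall m x, W x -> locally x (fun t => Derive_n g' m t = Derive_n g (S m) t)).
    { intros m x Hx. apply (filter_imp W); [| apply HW; auto].
      intros t Ht. rewrite Derive_n_S. symmetry. apply Derive_n_ext_loc.
      apply (filter_imp W); [| apply HW; auto]. intros; apply is_derive_unique; auto. }
    split.
    + intros m Hm x Hx. destruct m; [exists (g' x); apply H1; auto|].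
      apply (ex_derive_ext_loc (Derive_n g' m)); [apply Hl; auto | apply H2; auto; lia].
    + intros x Hx. apply (continuous_ext_loc _ (Derive_n g' n)); [apply Hl; auto | apply H3; auto].
Qed.

Lemma Ck_on_Ck k g W : open W -> (Ck_on k g W <-> Ck k g W).
Proof.
  intro HW; destruct k as [n|]; [apply Ck_on_fin_Cn; auto|]. simpl. split.
  - intros H n. apply Ck_on_fin_Cn; auto. split; intros; auto.
    apply (ex_derive_continuous (V := R_NormedModule)); auto.
  - intros H m x Hx. apply (proj2 (Ck_on_fin_Cn (S m) g W HW) (H (S m))); auto.
Qed.

Lemma Ck_on_mono k g (S S' : R -> Prop) : (forall x, S' x -> S x) -> Ck_on k g S -> Ck_on k g S'.
Proof. destruct k; simpl; intros Hs H; [destruct H as [H1 H2]; split|]; intros; auto. Qed.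

Lemma Ck_on_singleton_ext k g g1 y : locally y (fun t => g t = g1 t) ->
  Ck_on k g1 (fun x => x = y) -> Ck_on k g (fun x => x = y).
Proof.
  intros Hl. assert (Hn : forall m, locally y (fun t => Derive_n g1 m t = Derive_n g m t)).
  { intro m. apply (filter_imp (fun t => locally t (fun s => g s = g1 s))).
    - intros t Ht. symmetry. apply Derive_n_ext_loc, Ht.
    - apply locally_locally, Hl. }
  destruct k as [n|]; simpl; [intros [H1 H2]; split|intros H];
    intros; subst; [eapply ex_derive_ext_loc | eapply continuous_ext_loc | eapply ex_derive_ext_loc];
    eauto; apply (filter_imp _ _ (fun t (E : Derive_n g1 _ t = Derive_n g _ t) => eq_sym E)); auto.
Qed.

Lemma Ck_on_local k g (S : R -> Prop) :
  (forall y, S y -> exists (N : R -> Prop) g1,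
     open N /\ N y /\ (forall z, N z -> g z = g1 z) /\ Ck_on k g1 N) ->
  Ck_on k g S.
Proof.
  intro H. assert (Hpt : forall y, S y -> Ck_on k g (fun x => x = y)).
  { intros y Hy. destruct (H y Hy) as [N [g1 [HN [HNy [He Hc]]]]].
    apply (Ck_on_singleton_ext k g g1); [apply (filter_imp N); auto|].
    apply (Ck_on_mono k g1 N); auto. intros; subst; auto. }
  destruct k; simpl in *; [split|]; intros;
    match goal with Hy : S ?y |- _ => pose proof (Hpt y Hy) as P end; simpl in P;
    try destruct P as [P1 P2]; auto.
Qed.

Lemma Ck_on_ext k g1 g2 W : open W -> (forall x, W x -> g1 x = g2 x) ->
  Ck_on k g1 W -> Ck_on k g2 W.
Proof.
  intros HW He H. apply Ck_on_local. intros y Hy.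
  exists W, g1. repeat split; auto. intros; symmetry; auto.
Qed.

Lemma Ck_on_const k c (S : R -> Prop) : Ck_on k (fun _ => c) S.
Proof.
  apply (Ck_on_mono k _ (fun _ => True)); auto.
  apply Ck_on_Ck; [apply open_true | destruct k; simpl; intros; apply Cn_const].
Qed.

Lemma Ck_on_id k (S : R -> Prop) : Ck_on k (fun y => y) S.
Proof.
  apply (Ck_on_mono k _ (fun _ => True)); auto.
  apply Ck_on_Ck; [apply open_true | destruct k; simpl; intros; apply Cn_id].
Qed.

Lemma Ck_on_plus k f g W : open W -> Ck_on k f W -> Ck_on k g W ->
  Ck_on k (fun y => f y + g y) W.
Proof.
  intros HW Hf Hg. apply Ck_on_Ck in Hf, Hg; auto. apply Ck_on_Ck; auto.
  destruct k; simpl in *; intros; apply Cn_plus; auto.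
Qed.

Lemma Ck_on_mult k f g W : open W -> Ck_on k f W -> Ck_on k g W ->
  Ck_on k (fun y => f y * g y) W.
Proof.
  intros HW Hf Hg. apply Ck_on_Ck in Hf, Hg; auto. apply Ck_on_Ck; auto.
  destruct k; simpl in *; intros; apply Cn_mult; auto.
Qed.

Lemma Ck_on_comp k f g (A B : R -> Prop) : open A -> open B -> (forall x, A x -> B (g x)) ->
  Ck_on k g A -> Ck_on k f B -> Ck_on k (fun x => f (g x)) A.
Proof.
  intros HA HB HAB Hg Hf. apply Ck_on_Ck in Hg; auto. apply Ck_on_Ck in Hf; auto.
  apply Ck_on_Ck; auto. destruct k; simpl in *; intros; eapply Cn_comp; eauto.
Qed.

Lemma Ck_on_is_derive k g W : k <> fin 0 -> Ck_on k g W ->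
  forall x, W x -> is_derive g x (Derive g x).
Proof.
  intros hk H x Hx. apply Derive_correct. destruct k as [[|n]|]; simpl in H.
  - congruence.
  - apply (proj1 H 0%nat); auto; lia.
  - apply (H 0%nat); auto.
Qed.

Lemma Ck_on_continuous k g W : k <> fin 0 -> Ck_on k g W -> forall x, W x -> continuous g x.
Proof. intros; eapply is_derive_continuous, Ck_on_is_derive; eauto. Qed.

Lemma Ck_on_inv_on k K w : k <> fin 0 -> open K -> incr_on K w -> Ck_on k w K ->
  (forall x, K x -> 0 < Derive w x) -> Ck_on k (inv_on K w) (image w K).
Proof.
  intros hk HK Hi Hw Hp.
  assert (Hd := Ck_on_is_derive k w K hk Hw).
  assert (HI : open (image w K)).
  { apply (incr_on_image_open K); auto. intros; eapply is_derive_continuous; eauto. }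
  apply Ck_on_Ck in Hw; auto. apply Ck_on_Ck; auto.
  assert (Hn : forall n, Cn (S n) w K -> Cn (S n) (inv_on K w) (image w K)).
  { intros n [w1 [H1 H2]]. apply (Cn_inv_on n K w w1); auto.
    intros x Hx. rewrite <- (is_derive_unique _ _ _ (H1 x Hx)); auto. }
  destruct k as [[|n]|]; [congruence | apply Hn, Hw |].
  intro n. apply (Cn_le (S n)); [lia | apply Hn, Hw].
Qed.

(** * A smooth ramp *)

Lemma pow_le_fact_exp x n : 0 <= x -> x ^ n <= INR (fact n) * exp x.
Proof.
  intro Hx. pose proof (exp_ge_taylor x n Hx) as H.
  assert (Hf : 0 < INR (fact n)) by apply INR_fact_lt_0.
  assert (Hn : x ^ n / INR (fact n) <= sum_f_R0 (fun k => x ^ k / INR (fact k)) n).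
  { destruct n as [|n]; [unfold sum_f_R0; lra|].
    change (sum_f_R0 ?f (S n)) with (sum_f_R0 f n + f (S n)).
    assert (0 <= sum_f_R0 (fun k => x ^ k / INR (fact k)) n); [|lra].
    apply cond_pos_sum. intro k. apply Rdiv_le_0_compat; [apply pow_le; auto | apply INR_fact_lt_0]. }
  apply (Rmult_le_reg_r (/ INR (fact n))); [apply Rinv_0_lt_compat; auto|].
  replace (INR (fact n) * exp x * / INR (fact n)) with (exp x) by (field; lra). unfold Rdiv in Hn. lra.
Qed.

Definition flat (j : nat) (x : R) : R := if Rlt_dec 0 x then exp (- / x) * / x ^ j else 0.

Lemma flat_nonneg j x : 0 <= flat j x.
Proof.
  unfold flat; destruct Rlt_dec; [|lra].
  apply Rmult_le_pos; [left; apply exp_pos | left; apply Rinv_0_lt_compat, pow_lt; auto].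
Qed.

Lemma flat_le0 j x : x <= 0 -> flat j x = 0.
Proof. intro; unfold flat; destruct Rlt_dec; lra. Qed.

Lemma flat_0_pos x : 0 < x -> 0 < flat 0 x.
Proof.
  intro; unfold flat; destruct Rlt_dec; [|lra]. simpl. rewrite Rinv_1, Rmult_1_r; apply exp_pos.
Qed.

Lemma flat_0_le x y : x <= y -> flat 0 x <= flat 0 y.
Proof.
  intro Hxy. destruct (Rle_or_lt x 0) as [Hx|Hx]; [rewrite flat_le0 by auto; apply flat_nonneg|].
  unfold flat; do 2 (destruct Rlt_dec; [|lra]). simpl. rewrite Rinv_1, !Rmult_1_r.
  destruct (Rle_lt_or_eq_dec _ _ Hxy) as [H|<-]; [|lra].
  left; apply exp_increasing. apply Ropp_lt_contravar, Rinv_lt_contravar; nra.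
Qed.

Lemma flat_div_le j h : 0 < h -> flat j h / h <= INR (fact (S (S j))) * h.
Proof.
  intro Hh. unfold flat; destruct Rlt_dec; [|lra].
  assert (Hb := pow_le_fact_exp (/ h) (S (S j)) ltac:(left; apply Rinv_0_lt_compat; lra)).
  assert (He := exp_pos (/ h)). assert (Hj : 0 < h ^ j) by (apply pow_lt; lra).
  apply Rmult_le_reg_r with (exp (/ h) / h); [apply Rdiv_lt_0_compat; lra|].
  replace (exp (- / h) * / h ^ j / h * (exp (/ h) / h)) with ((/ h) ^ S (S j)).
  - replace (INR (fact (S (S j))) * h * (exp (/ h) / h))
      with (INR (fact (S (S j))) * exp (/ h)) by (field; lra). exact Hb.
  - rewrite exp_Ropp, pow_inv. simpl. field. repeat split; lra.
Qed.

Lemma flat_is_derive j x : is_derive (flat j) x (flat (S (S j)) x + - INR j * flat (S j) x).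
Proof.
  destruct (Rtotal_order x 0) as [Hx|[->|Hx]].
  - rewrite !flat_le0 by lra. replace (0 + - INR j * 0) with 0 by ring.
    apply (is_derive_ext_loc (fun _ => 0)); [|exact (is_derive_const (V := R_NormedModule) 0 x)].
    apply (filter_imp (fun y => y < 0)); [intros; symmetry; apply flat_le0; lra | apply open_lt; auto].
  - rewrite !flat_le0 by lra. replace (0 + - INR j * 0) with 0 by ring.
    apply is_derive_Reals. intros eps He.
    set (C := INR (fact (S (S j)))). assert (HC : 0 < C) by apply INR_fact_lt_0.
    exists (mkposreal (eps / C) (Rdiv_lt_0_compat _ _ He HC)). simpl. intros h Hh Hhd.
    rewrite Rplus_0_l, (flat_le0 j 0), !Rminus_0_r by lra.
    destruct (Rlt_or_le 0 h) as [Hp|Hp]; [|rewrite flat_le0, Rdiv_0_l, Rabs_R0; auto].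
    rewrite Rabs_right in * by (try apply Rle_ge, Rdiv_le_0_compat; auto using flat_nonneg; lra).
    apply Rle_lt_trans with (C * h); [apply flat_div_le; auto|].
    apply (Rmult_lt_compat_l C) in Hhd; auto.
    replace (C * (eps / C)) with eps in Hhd by (field; lra). lra.
  - apply (is_derive_ext_loc (fun y => exp (- / y) * / y ^ j)).
    + apply (filter_imp (fun y => 0 < y)); [|apply open_gt; auto].
      intros; unfold flat; destruct Rlt_dec; lra.
    + unfold flat. destruct Rlt_dec; [|lra].
      auto_derive; [repeat split; try lra; apply pow_nonzero; lra|].
      destruct j; simpl; field; repeat split; try lra; try apply pow_nonzero; lra.
Qed.

Lemma Cn_flat n j W : Cn n (flat j) W.
Proof.
  revert j; induction n; intro j.
  - intros x _. eapply is_derive_continuous, flat_is_derive.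
  - exists (fun x => flat (S (S j)) x + - INR j * flat (S j) x); split; [intros; apply flat_is_derive|].
    apply Cn_plus; auto. apply Cn_mult; auto. apply Cn_const.
Qed.

Definition step (x : R) : R := flat 0 x / (flat 0 x + flat 0 (1 - x)).

Lemma step_den x : 0 < flat 0 x + flat 0 (1 - x).
Proof.
  pose proof (flat_nonneg 0 x); pose proof (flat_nonneg 0 (1 - x)).
  destruct (Rlt_dec 0 x); [pose proof (flat_0_pos x r); lra|]. pose proof (flat_0_pos (1 - x)); lra.
Qed.

Lemma step_0 x : x <= 0 -> step x = 0.
Proof. intro; unfold step; rewrite (flat_le0 0 x) by lra; unfold Rdiv; ring. Qed.

Lemma step_1 x : 1 <= x -> step x = 1.
Proof.
  intro; unfold step; rewrite (flat_le0 0 (1 - x)), Rplus_0_r by lra.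
  field. pose proof (flat_0_pos x); lra.
Qed.

Lemma step_le x y : x <= y -> step x <= step y.
Proof.
  intro Hxy. unfold step. pose proof (step_den x); pose proof (step_den y).
  pose proof (flat_0_le x y Hxy); pose proof (flat_0_le (1 - y) (1 - x) ltac:(lra)).
  pose proof (flat_nonneg 0 x); pose proof (flat_nonneg 0 (1 - y)).
  apply Rmult_le_reg_r with ((flat 0 x + flat 0 (1 - x)) * (flat 0 y + flat 0 (1 - y))).
  { apply Rmult_lt_0_compat; auto. }
  unfold Rdiv. field_simplify; try lra. nra.
Qed.

Lemma step_range x : 0 <= step x <= 1.
Proof.
  unfold step. pose proof (step_den x).
  pose proof (flat_nonneg 0 x); pose proof (flat_nonneg 0 (1 - x)).
  split; [apply Rdiv_le_0_compat; lra|].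
  apply Rmult_le_reg_r with (flat 0 x + flat 0 (1 - x)); auto. field_simplify; lra.
Qed.

Lemma Ck_on_step k (S : R -> Prop) : Ck_on k step S.
Proof.
  apply (Ck_on_mono k _ (fun _ => True)); auto.
  assert (H : forall n, Cn n step (fun _ => True)).
  { intro n. unfold step, Rdiv. apply Cn_mult; [apply Cn_flat|].
    apply Cn_inv; [|intros; apply Rgt_not_eq, step_den].
    apply Cn_plus; [apply Cn_flat|].
    apply (Cn_comp n (flat 0) (fun x => 1 - x) _ (fun _ => True)); auto; [|apply Cn_flat].
    apply Cn_plus; [apply Cn_const|].
    apply (Cn_ext n (fun x => -1 * x)); [apply open_true | intros; ring |].
    apply Cn_mult; [apply Cn_const | apply Cn_id]. }
  apply Ck_on_Ck; [apply open_true | destruct k; simpl; auto].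
Qed.

Definition ramp (s1 s2 y : R) : R := step ((y - s1) / (s2 - s1)).

Lemma ramp_0 s1 s2 y : s1 < s2 -> y <= s1 -> ramp s1 s2 y = 0.
Proof. intros H Hy. apply step_0. apply Rmult_le_0_r; [lra | left; apply Rinv_0_lt_compat; lra]. Qed.

Lemma ramp_1 s1 s2 y : s1 < s2 -> s2 <= y -> ramp s1 s2 y = 1.
Proof.
  intros H Hy. apply step_1. apply (Rmult_le_reg_r (s2 - s1)); [lra|].
  unfold Rdiv; rewrite Rmult_assoc, Rinv_l; lra.
Qed.

Lemma Ck_on_ramp k s1 s2 (S : R -> Prop) : Ck_on k (ramp s1 s2) S.
Proof.
  apply (Ck_on_mono k _ (fun _ => True)); auto.
  apply (Ck_on_comp k step (fun y => (y - s1) / (s2 - s1)) _ (fun _ => True));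
    auto using open_true, Ck_on_step.
  apply Ck_on_mult; [apply open_true | | apply Ck_on_const].
  apply Ck_on_plus; [apply open_true | apply Ck_on_id | apply Ck_on_const].
Qed.

Lemma ex_derive_ramp s1 s2 y : ex_derive (ramp s1 s2) y.
Proof.
  exists (Derive (ramp s1 s2) y).
  apply (Ck_on_is_derive infty _ (fun _ => True)); [discriminate | apply Ck_on_ramp | exact I].
Qed.

Lemma Derive_ramp_nonneg s1 s2 y : s1 < s2 -> 0 <= Derive (ramp s1 s2) y.
Proof.
  intro H. apply (nondecr_Derive_nonneg (fun _ => True) (ramp s1 s2) y); auto using open_true.
  - intros x z _ _ Hxz. apply step_le. unfold Rdiv.
    apply Rmult_le_compat_r; [left; apply Rinv_0_lt_compat|]; lra.
  - apply Derive_correct, ex_derive_ramp.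
Qed.

Lemma Derive_ramp_out s1 s2 y : s1 < s2 -> y < s1 \/ s2 < y -> Derive (ramp s1 s2) y = 0.
Proof.
  intros H [Hy|Hy]; [rewrite <- (Derive_const 0 y) | rewrite <- (Derive_const 1 y)];
    apply Derive_ext_loc.
  - apply (filter_imp (fun z => z < s1)); [intros; apply ramp_0; lra | apply open_lt; auto].
  - apply (filter_imp (fun z => s2 < z)); [intros; apply ramp_1; lra | apply open_gt; auto].
Qed.

Lemma blend_Derive_pos (A B lam : R -> R) y :
  ex_derive A y -> ex_derive B y -> ex_derive lam y -> 0 <= lam y <= 1 ->
  0 < Derive A y -> 0 < Derive B y -> 0 <= Derive lam y * (B y - A y) ->
  0 < Derive (fun y => (1 - lam y) * A y + lam y * B y) y.
Proof.
  intros HA HB Hl Hr HdA HdB Hx.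
  rewrite Derive_plus, !Derive_mult, Derive_minus, Derive_const;
    auto using ex_derive_mult, ex_derive_minus, ex_derive_const.
  destruct (Rlt_or_le (lam y) 1); [|replace (lam y) with 1 by lra]; nra.
Qed.

(* The blend has derivative [(1 - lam) + lam u' + lam' (u + beta - id)], and
   [s2 - u s1 <= beta] makes the last term nonnegative where [lam' <> 0]. *)
Lemma ramp_blend k u al ga s1 s2 beta : k <> fin 0 -> al < s1 -> s1 < s2 -> s2 < ga ->
  Ck_on k u (itv al ga) -> incr_on (itv al ga) u ->
  (forall y, itv al ga y -> 0 < Derive u y) -> s2 - u s1 <= beta ->
  exists w, Ck_on k w (fun y => y < ga) /\ (forall y, y < ga -> 0 < Derive w y) /\
    (forall y, y <= s1 -> w y = y) /\ (forall y, s2 <= y -> w y = u y + beta).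
Proof.
  intros hk Hal Hs Hga Cu Iu Du Hbeta. set (lam := ramp s1 s2).
  set (w := fun y => (1 - lam y) * y + lam y * (u y + beta)).
  assert (Hw0 : forall y, y <= s1 -> w y = y) by (intros; unfold w, lam; rewrite ramp_0; auto; ring).
  assert (Hw1 : forall y, s2 <= y -> w y = u y + beta)
    by (intros; unfold w, lam; rewrite ramp_1; auto; lra).
  assert (Hid : forall y, y < s1 -> locally y (fun z => w z = z)).
  { intros y Hy. apply (filter_imp (fun z => z < s1)); [intros; apply Hw0; lra | apply open_lt; auto]. }
  assert (HJ := open_itv al ga).
  exists w. split; [|split; [|split; auto]].
  - apply Ck_on_local. intros y Hy. destruct (Rlt_dec y s1) as [H1|H1].
    + exists (fun z => z < s1), (fun z => z). repeat split; auto using open_lt, Ck_on_id.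
      intros; apply Hw0; lra.
    + exists (itv al ga), w. repeat split; auto; try (unfold itv; lra).
      assert (Cl : Ck_on k lam (itv al ga)) by apply Ck_on_ramp.
      apply Ck_on_plus; [auto | apply Ck_on_mult | apply Ck_on_mult];
        auto using Ck_on_id, Ck_on_plus, Ck_on_const.
      apply Ck_on_plus; auto using Ck_on_const.
      apply (Ck_on_ext k (fun y => -1 * lam y)); auto using Ck_on_mult, Ck_on_const. intros; ring.
  - intros y Hy. destruct (Rlt_dec y s1) as [H1|H1].
    + rewrite (Derive_ext_loc w id), Derive_id by (apply Hid; auto). lra.
    + assert (Hy' : itv al ga y) by (unfold itv; lra).
      assert (Hu := Ck_on_is_derive k u _ hk Cu y Hy').
      assert (HuD : Derive (fun z => u z + beta) y = Derive u y).
      { rewrite Derive_plus, Derive_const; [ring | eexists; eauto | apply ex_derive_const]. }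
      apply blend_Derive_pos; [apply ex_derive_id | | apply ex_derive_ramp | apply step_range | | |].
      * exists (Derive u y + 0).
        exact (is_derive_plus (V := R_NormedModule) u (fun _ => beta) y _ _ Hu
                 (is_derive_const beta y)).
      * replace (Derive (fun z => z) y) with 1 by (symmetry; apply Derive_id). lra.
      * rewrite HuD. apply Du; auto.
      * destruct (Rle_dec y s2) as [H2|H2].
        -- apply Rmult_le_pos; [apply Derive_ramp_nonneg; auto|].
           assert (u s1 <= u y); [|lra].
           destruct (Req_dec y s1) as [->|]; [lra | left; apply Iu; unfold itv; lra].
        -- unfold lam; rewrite Derive_ramp_out by lra. lra.
Qed.

(** * Charts on open subsets of R *)

Lemma incr_on_transition D f g u : incr_on D f -> incr_on D g ->
  (forall x, D x -> u (f x) = g x) -> incr_on (image f D) u.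
Proof.
  intros If Ig Hu y1 y2 [x1 [Hx1 <-]] [x2 [Hx2 <-]] Hy. rewrite !Hu by auto. apply Ig; auto.
  destruct (Rlt_or_le x1 x2) as [|[Hlt | <-]]; auto; exfalso; [specialize (If x2 x1 Hx2 Hx1 Hlt)|]; lra.
Qed.

Lemma transition_Derive_pos k D f g u v : k <> fin 0 -> open (image f D) ->
  incr_on D f -> incr_on D g -> (forall x, D x -> u (f x) = g x) -> (forall x, D x -> v (g x) = f x) ->
  Ck_on k u (image f D) -> Ck_on k v (image g D) -> forall y, image f D y -> 0 < Derive u y.
Proof.
  intros hk HW If Ig Hu Hv Cu Cv y Hy.
  apply (incr_on_Derive_pos (image f D) u v y); auto.
  - apply (incr_on_transition D f g); auto.
  - apply (Ck_on_is_derive k u _ hk Cu); auto.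
  - destruct Hy as [x [Hx <-]]. rewrite Hu by auto.
    apply (Ck_on_is_derive k v _ hk Cv). exists x; auto.
  - intros z [x [Hx <-]]. rewrite Hu; auto.
Qed.

Definition is_chartR (D : R -> Prop) (f : R -> R) : Prop :=
  open D /\ (forall x, D x -> continuous f x) /\
  (forall a b, D a -> D b -> f a = f b -> a = b) /\
  (forall O : R -> Prop, (forall x, O x -> D x) -> open O -> open (image f O)).

Definition trans_CkR (k : smoothness) (D1 : R -> Prop) (f1 : R -> R) (D2 : R -> Prop) (f2 : R -> R) :=
  exists g, (forall x, D1 x -> D2 x -> g (f1 x) = f2 x) /\
    Ck_on k g (image f1 (fun x => D1 x /\ D2 x)).

Lemma is_chartR_open_image D f (O : R -> Prop) : is_chartR D f ->
  (forall x, O x -> D x) -> open O -> open (image f O).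
Proof. intros [_ [_ [_ H]]]; auto. Qed.

Lemma is_chartR_open_image_inter D f (D' : R -> Prop) : is_chartR D f -> open D' ->
  open (image f (fun x => D x /\ D' x)).
Proof.
  intros Hc HD'. apply (is_chartR_open_image D); auto; [intros x [? _]; auto|].
  apply open_and; auto. apply Hc.
Qed.

Lemma is_chartR_mono D f (D' : R -> Prop) : is_chartR D f -> open D' ->
  (forall x, D' x -> D x) -> is_chartR D' f.
Proof. intros [H1 [H2 [H3 H4]]] HD' Hs. repeat split; auto. Qed.

Lemma incr_is_chartR D f : open D -> incr_on D f -> (forall x, D x -> continuous f x) ->
  is_chartR D f.
Proof.
  intros HD Hi Hc. repeat split; auto; [apply incr_on_inj | intros; eapply incr_on_image_open]; eauto.
Qed.

Lemma trans_CkR_mono k D1 f1 D2 f2 (D1' D2' : R -> Prop) f1' f2' : trans_CkR k D1 f1 D2 f2 ->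
  (forall x, D1' x -> D2' x -> D1 x /\ D2 x /\ f1' x = f1 x /\ f2' x = f2 x) ->
  trans_CkR k D1' f1' D2' f2'.
Proof.
  intros [g [H1 H2]] Hs. exists g; split.
  - intros x Ha Hb. destruct (Hs x Ha Hb) as [? [? [-> ->]]]; auto.
  - eapply Ck_on_mono; [|exact H2]. intros y [x [[Ha Hb] <-]].
    destruct (Hs x Ha Hb) as [? [? [-> _]]]. exists x; auto.
Qed.

(* Smoothness is local, so a transition may be factored through intermediate charts. *)
Lemma trans_CkR_via k D1 f1 D2 f2 (G : (R -> Prop) -> (R -> R) -> Prop) :
  is_chartR D1 f1 -> open D2 ->
  (forall x, D1 x -> D2 x -> exists D f, G D f /\ D x) ->
  (forall D f, G D f -> is_chartR D f /\ trans_CkR k D1 f1 D f /\ trans_CkR k D f D2 f2) ->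
  trans_CkR k D1 f1 D2 f2.
Proof.
  intros Hc1 HD2 Hcov HG. assert (Hinj := proj1 (proj2 (proj2 Hc1))).
  exists (fun y => f2 (inv_on D1 f1 y)). split; [intros; rewrite inv_on_eq; auto|].
  apply Ck_on_local. intros y [x [[Hx1 Hx2] <-]].
  destruct (Hcov x Hx1 Hx2) as [D [f [HGf HDx]]].
  destruct (HG D f HGf) as [Hc [[g1 [G1 G1c]] [g2 [G2 G2c]]]].
  exists (image f1 (fun z => D1 z /\ (D2 z /\ D z))), (fun y => g2 (g1 y)).
  split; [apply is_chartR_open_image_inter; auto; apply open_and; auto; apply Hc|].
  split; [exists x; auto|]. split.
  { intros y' [z [[Hz1 [Hz2 Hz3]] <-]]. rewrite G1, G2, inv_on_eq; auto. }
  apply (Ck_on_comp k g2 g1 _ (image f (fun z => D z /\ D2 z))).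
  - apply is_chartR_open_image_inter; auto. apply open_and; auto; apply Hc.
  - apply is_chartR_open_image_inter; auto.
  - intros y' [z [[Hz1 [Hz2 Hz3]] <-]]. rewrite G1; auto. exists z; auto.
  - apply (Ck_on_mono k g1 (image f1 (fun z => D1 z /\ D z))); auto.
    intros y' [z [[Hz1 [Hz2 Hz3]] <-]]. exists z; auto.
  - auto.
Qed.

Lemma open_preimage_on (O B : R -> Prop) h : open O -> open B ->
  (forall y, O y -> continuous h y) -> open (fun y => O y /\ B (h y)).
Proof.
  intros HO HB Hc y [Hy Hb].
  apply (filter_and (fun y => O y) (fun y => B (h y))); [apply HO; auto|].
  apply (Hc y Hy (fun z => B z)), HB; auto.
Qed.

Lemma Ck_on_opp k (S : R -> Prop) : Ck_on k (fun y => - y) S.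
Proof.
  apply (Ck_on_mono k _ (fun _ => True)); auto.
  apply (Ck_on_ext k (fun y => -1 * y)); [apply open_true | intros; ring |].
  apply Ck_on_mult; auto using open_true, Ck_on_const, Ck_on_id.
Qed.

(** * Increasing charts compatible with an atlas of R *)

Section AtlasOnR.

Variable k : smoothness.
Hypothesis hk : k <> fin 0.
Variable F : (R -> Prop) -> (R -> R) -> Prop.
Hypothesis F_chart : forall D f, F D f -> is_chartR D f.
Hypothesis F_cover : forall x, exists D f, F D f /\ D x.
Hypothesis F_trans : forall D1 f1 D2 f2, F D1 f1 -> F D2 f2 -> trans_CkR k D1 f1 D2 f2.

Definition compatible (D : R -> Prop) (f : R -> R) : Prop :=
  forall D' f', F D' f' -> trans_CkR k D f D' f' /\ trans_CkR k D' f' D f.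

Lemma compatible_F D f : F D f -> compatible D f.
Proof. intros H D' f' H'; split; apply F_trans; auto. Qed.

Lemma compatible_trans D1 f1 D2 f2 : is_chartR D1 f1 -> is_chartR D2 f2 ->
  compatible D1 f1 -> compatible D2 f2 -> trans_CkR k D1 f1 D2 f2.
Proof.
  intros H1 H2 C1 C2. apply (trans_CkR_via k D1 f1 D2 f2 F); auto; [apply H2|].
  intros D f HDf. split; [auto | split; [apply C1 | apply C2]; auto].
Qed.

Lemma compatible_mono D f (D' : R -> Prop) : compatible D f -> (forall x, D' x -> D x) ->
  compatible D' f.
Proof.
  intros C Hs D1 f1 HF. destruct (C D1 f1 HF).
  split; [apply (trans_CkR_mono k D f D1 f1) | apply (trans_CkR_mono k D1 f1 D f)]; auto.
Qed.

Lemma compatible_comp D f w w' (J : R -> Prop) : is_chartR D f -> compatible D f ->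
  open J -> open (image w J) -> (forall x, D x -> J (f x)) -> Ck_on k w J ->
  Ck_on k w' (image w J) -> (forall y, J y -> w' (w y) = y) -> compatible D (fun x => w (f x)).
Proof.
  intros Hc C HJ HwJ HfJ Cw Cw' Hw' Dc c HFc.
  destruct (C Dc c HFc) as [[g1 [G1 C1]] [g2 [G2 C2]]]. assert (Hcc := F_chart Dc c HFc).
  assert (HB := is_chartR_open_image_inter D f Dc Hc (proj1 Hcc)).
  split.
  - exists (fun y => g1 (w' y)). split; [intros; rewrite Hw'; auto|].
    set (B := image f (fun x => D x /\ Dc x)).
    apply (Ck_on_mono _ _ (fun y => image w J y /\ B (w' y))).
    { intros y [x [[Hx Hcx] <-]]. split; [exists (f x); auto|]. rewrite Hw' by auto. exists x; auto. }
    apply (Ck_on_comp k g1 w' _ B); auto.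
    + apply open_preimage_on; auto. intros; eapply Ck_on_continuous; eauto.
    + intros y [_ Hy]; auto.
    + apply (Ck_on_mono k w' (image w J)); [intros y [Hy _] |]; auto.
  - exists (fun y => w (g2 y)). split; [intros; rewrite G2; auto|].
    apply (Ck_on_comp k w g2 _ J); auto.
    + apply is_chartR_open_image_inter; auto. apply Hc.
    + intros y [x [[Hx1 Hx2] <-]]. rewrite G2; auto.
Qed.

Lemma compatible_incr_comp D f w (J : R -> Prop) : is_chartR D f -> compatible D f ->
  open J -> incr_on J w -> Ck_on k w J -> (forall y, J y -> 0 < Derive w y) ->
  (forall x, D x -> J (f x)) -> compatible D (fun x => w (f x)).
Proof.
  intros Hc C HJ Iw Cw Dw HfJ.
  apply (compatible_comp D f w (inv_on J w) J); auto using Ck_on_inv_on.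
  - apply (incr_on_image_open J); auto. intros; eapply Ck_on_continuous; eauto.
  - intros; apply inv_on_eq; auto. apply incr_on_inj; auto.
Qed.

Lemma compatible_opp D f : is_chartR D f -> compatible D f -> compatible D (fun x => - f x).
Proof.
  intros Hc C. apply (compatible_comp D f Ropp Ropp (fun _ => True)); auto using open_true, Ck_on_opp.
  - apply (open_ext (fun _ => True)); [|apply open_true].
    intro y; split; auto. intros _. exists (- y); split; auto; ring.
  - intros; ring.
Qed.

Lemma compatible_local D H : is_chartR D H ->
  (forall x, D x -> exists J h, open J /\ J x /\ (forall z, J z -> D z) /\
     (forall z, J z -> H z = h z) /\ is_chartR J h /\ compatible J h) ->
  compatible D H.
Proof.
  intros Hc Hloc Dc c HFc. assert (Hcc := F_chart Dc c HFc).
  assert (HinjH := proj1 (proj2 (proj2 Hc))). assert (Hinjc := proj1 (proj2 (proj2 Hcc))).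
  split.
  - exists (fun y => c (inv_on D H y)). split; [intros; rewrite inv_on_eq; auto|].
    apply Ck_on_local. intros y [x [[Hx Hcx] <-]].
    destruct (Hloc x Hx) as [J [h [HJ [HJx [HJD [HE [Hch Ch]]]]]]].
    destruct (Ch Dc c HFc) as [[g1 [G1 G1c]] _].
    exists (image h (fun z => J z /\ Dc z)), g1.
    split; [apply is_chartR_open_image_inter; auto; apply Hcc|].
    split; [exists x; split; [auto | symmetry; apply HE; auto]|]. split; auto.
    intros y' [z [[Hz1 Hz2] <-]]. rewrite <- HE, inv_on_eq, HE, G1; auto.
  - exists (fun y => H (inv_on Dc c y)). split; [intros; rewrite inv_on_eq; auto|].
    apply Ck_on_local. intros y [x [[Hcx Hx] <-]].
    destruct (Hloc x Hx) as [J [h [HJ [HJx [HJD [HE [Hch Ch]]]]]]].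
    destruct (Ch Dc c HFc) as [_ [g2 [G2 G2c]]].
    exists (image c (fun z => Dc z /\ J z)), g2.
    split; [apply is_chartR_open_image_inter; auto|]. split; [exists x; auto|]. split; auto.
    intros y' [z [[Hz1 Hz2] <-]]. rewrite inv_on_eq, HE, G2; auto.
Qed.

Definition incr_chart (D : R -> Prop) (f : R -> R) : Prop :=
  open D /\ incr_on D f /\ (forall x, D x -> continuous f x) /\ compatible D f.

Lemma incr_chart_is_chartR D f : incr_chart D f -> is_chartR D f.
Proof. intros [H1 [H2 [H3 H4]]]; apply incr_is_chartR; auto. Qed.

Lemma incr_chart_mono D f (D' : R -> Prop) : incr_chart D f -> open D' ->
  (forall x, D' x -> D x) -> incr_chart D' f.
Proof.
  intros [H1 [H2 [H3 H4]]] HD' Hs. split; [auto | split; [|split]].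
  - intros x y Hx Hy; apply H2; auto.
  - auto.
  - apply compatible_mono with D; auto.
Qed.

Lemma incr_chart_local D H : open D -> incr_on D H ->
  (forall x, D x -> exists J h, open J /\ J x /\ (forall z, J z -> D z) /\ incr_chart J h /\
     (forall z, J z -> H z = h z)) ->
  incr_chart D H.
Proof.
  intros HD Hi Hloc.
  assert (Hc : forall x, D x -> continuous H x).
  { intros x Hx. destruct (Hloc x Hx) as [J [h [HJ [HJx [HJD [Hg HE]]]]]].
    apply (continuous_ext_loc _ h); [|apply Hg; auto].
    apply (filter_imp J); [intros; symmetry |]; auto. }
  split; [auto | split; [auto | split; [auto |]]].
  apply compatible_local; [apply incr_is_chartR; auto|].
  intros x Hx. destruct (Hloc x Hx) as [J [h [HJ [HJx [HJD [Hg HE]]]]]].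
  exists J, h. do 4 (split; auto). split; [apply incr_chart_is_chartR | apply Hg]; auto.
Qed.

Lemma incr_chart_comp D f w (K : R -> Prop) : incr_chart D f -> open K -> is_interval K ->
  Ck_on k w K -> (forall y, K y -> 0 < Derive w y) -> (forall x, D x -> K (f x)) ->
  incr_chart D (fun x => w (f x)).
Proof.
  intros G HK Hcv Cw Dw HfK. destruct G as [HD [Hi [Hc C]]].
  assert (Iw : incr_on K w)
    by (apply incr_on_of_Derive_pos; auto; intros; eapply Ck_on_is_derive; eauto).
  split; [auto | split; [|split]].
  - intros x y Hx Hy Hxy; apply Iw; auto.
  - intros x Hx. apply continuous_comp; auto. eapply Ck_on_continuous; eauto.
  - apply compatible_incr_comp with K; auto. apply incr_is_chartR; auto.
Qed.

Lemma incr_chart_translate D g beta : incr_chart D g -> incr_chart D (fun x => g x + beta).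
Proof.
  intro G. apply (incr_chart_comp D g (fun y => y + beta) (fun _ => True)); auto using open_true.
  - intros x y z; auto.
  - apply Ck_on_plus; auto using open_true, Ck_on_id, Ck_on_const.
  - intros y _. rewrite Derive_plus, Derive_const, (Derive_ext (fun y => y) id), Derive_id by
      (auto using ex_derive_const, ex_derive_id). lra.
Qed.

Lemma incr_chart_of_inj a b c : a < b -> (forall t, a <= t <= b -> continuous c t) ->
  (forall x y, a <= x <= b -> a <= y <= b -> c x = c y -> x = y) -> c a < c b ->
  compatible (itv a b) c -> incr_chart (itv a b) c.
Proof.
  intros Hab Hc Hi Hlt C. split; [apply open_itv | split; [|split]]; auto.
  - intros y z Hy Hz Hyz. unfold itv in *. apply (incr_of_inj_continuous c a b); auto; lra.
  - intros x Hx; apply Hc; unfold itv in Hx; lra.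
Qed.

Lemma incr_chart_around x : exists a b f, a < x < b /\ incr_chart (itv a b) f.
Proof.
  destruct (F_cover x) as [D [c [HFc HDx]]]. assert (Hc := F_chart D c HFc).
  destruct Hc as [HD [Hcc [Hinj _]]].
  destruct (proj1 (open_Rabs D) HD x HDx) as [e [He Hb]].
  set (a := x - e/2). set (b := x + e/2).
  assert (Hab : forall t, a <= t <= b -> D t) by (intros; apply Hb, Rabs_def1; unfold a, b in *; lra).
  assert (Hsub : forall t, itv a b t -> D t) by (intros t Ht; apply Hab; unfold itv in Ht; lra).
  assert (C := compatible_F D c HFc).
  exists a, b. destruct (Rtotal_order (c a) (c b)) as [Hlt|[Heq|Hgt]].
  - exists c. split; [unfold a, b; lra|].
    apply incr_chart_of_inj; [unfold a, b; lra | intros; apply Hcc, Hab; auto | | auto |].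
    + intros; apply Hinj; auto.
    + apply compatible_mono with D; auto.
  - exfalso. apply Hinj in Heq; try apply Hab; unfold a, b in *; lra.
  - exists (fun t => - c t). split; [unfold a, b; lra|].
    apply incr_chart_of_inj; [unfold a, b; lra | | | lra |].
    + intros. apply (continuous_opp (V := R_NormedModule) c), Hcc, Hab; auto.
    + intros; apply Hinj; auto; lra.
    + apply compatible_mono with D; auto. apply compatible_opp; auto.
Qed.

Lemma incr_chart_glue_at a1 b1 h1 a2 b2 h2 m : incr_chart (itv a1 b1) h1 -> incr_chart (itv a2 b2) h2 ->
  a1 <= a2 -> a2 < m -> m < b1 -> b1 <= b2 -> (forall x, a2 < x < b1 -> h1 x = h2 x) ->
  incr_chart (itv a1 b2) (fun x => if Rlt_dec x m then h1 x else h2 x).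
Proof.
  intros G1 G2 H1 H2 H3 H4 Hag. pose proof G1 as [_ [I1 _]]. pose proof G2 as [_ [I2 _]].
  apply incr_chart_local; [apply open_itv | |].
  - intros x y Hx Hy Hxy. unfold itv in *.
    destruct (Rlt_dec x m), (Rlt_dec y m); try lra; [apply I1 | | apply I2]; unfold itv; try lra.
    assert (h1 x < h1 m) by (apply I1; unfold itv; lra). rewrite (Hag m) in H by lra.
    destruct (Req_dec y m) as [->|]; auto.
    assert (h2 m < h2 y) by (apply I2; unfold itv; lra). lra.
  - intros x Hx. unfold itv in Hx. destruct (Rtotal_order x m) as [Hl|[He|Hg]];
      [exists (itv a1 m), h1 | exists (itv a2 b1), h1 | exists (itv m b2), h2];
      (split; [apply open_itv | split; [unfold itv; lra | split; [unfold itv; intros; lra | split]]]);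
      try (eapply incr_chart_mono; eauto; [apply open_itv | unfold itv; intros; lra]);
      intros z Hz; unfold itv in Hz; destruct Rlt_dec; auto; try lra.
    symmetry; apply Hag; lra.
Qed.

Lemma incr_chart_transition a b f c d g : incr_chart (itv a b) f -> incr_chart (itv c d) g ->
  let ov x := itv a b x /\ itv c d x in
  exists u, (forall x, ov x -> u (f x) = g x) /\ Ck_on k u (image f ov) /\
    incr_on (image f ov) u /\ (forall y, image f ov y -> 0 < Derive u y).
Proof.
  intros Gf Gg ov.
  assert (Cf := incr_chart_is_chartR _ _ Gf). assert (Cg := incr_chart_is_chartR _ _ Gg).
  destruct (compatible_trans _ _ _ _ Cf Cg (proj2 (proj2 (proj2 Gf))) (proj2 (proj2 (proj2 Gg))))
    as [u [U1 U2]].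
  destruct (compatible_trans _ _ _ _ Cg Cf (proj2 (proj2 (proj2 Gg))) (proj2 (proj2 (proj2 Gf))))
    as [v [V1 V2]].
  assert (Iv : Ck_on k v (image g ov)).
  { refine (Ck_on_mono k v _ _ _ V2). intros y [x [[H1 H2] E]]. exists x; auto. }
  exists u. split; [intros x [? ?]; auto|]. split; [auto|]. split.
  - apply (incr_on_transition ov f g); [intros ? ? [] []; apply Gf | intros ? ? [] []; apply Gg|];
      auto; intros x [? ?]; auto.
  - apply (transition_Derive_pos k ov f g u v); auto.
    + apply is_chartR_open_image_inter; auto. apply open_itv.
    + intros ? ? [] []; apply Gf; auto.
    + intros ? ? [] []; apply Gg; auto.
    + intros x [? ?]; auto.
    + intros x [? ?]; auto.
Qed.

Lemma incr_chart_image_itv a b f p q y : incr_chart (itv a b) f -> a < p -> p < q -> q < b ->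
  f p < y < f q -> exists x, p < x < q /\ f x = y.
Proof.
  intros [_ [Hi [Hc _]]] H1 H2 H3 Hy.
  destruct (IVT_le f p q y) as [x [Hx <-]]; try lra; [intros; apply Hc; unfold itv; lra |].
  exists x; split; auto. destruct Hx as [[H4 | <-] [H5 | ->]]; lra.
Qed.

(* Between [p] and [q], [f] is bent into [g + beta] by [ramp_blend] applied to the
   transition map from [f] to [g]. *)
Lemma incr_chart_glue a b f c d g p q M : incr_chart (itv a b) f -> incr_chart (itv c d) g ->
  a < p -> c < p -> p < q -> q < b -> q < d ->
  exists beta h, M <= beta /\ incr_chart (itv a d) h /\ (forall x, a < x <= p -> h x = f x) /\
    (forall x, q <= x < d -> h x = g x + beta).
Proof.
  intros Gf Gg Hap Hcp Hpq Hqb Hqd.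
  destruct (incr_chart_transition a b f c d g Gf Gg) as [u [U1 [U2 [U3 U4]]]].
  pose proof Gf as [_ [If _]].
  assert (Hf : forall x y, a < x -> x < y -> y < b -> f x < f y) by (intros; apply If; unfold itv; lra).
  set (x1 := p + (q - p) / 4). set (x2 := p + (q - p) / 2). set (x3 := p + 3 * (q - p) / 4).
  set (beta := Rmax M (f x2 - u (f x1))).
  assert (HJ : forall y, itv (f p) (f q) y -> image f (fun x => itv a b x /\ itv c d x) y).
  { intros y Hy. destruct (incr_chart_image_itv a b f p q y) as [x [Hx <-]]; auto.
    exists x; split; auto; split; unfold itv; lra. }
  destruct (ramp_blend k u (f p) (f q) (f x1) (f x2) beta) as [w [Cw [Dw [Hw0 Hw1]]]];
    auto; try (apply Hf; unfold x1, x2; lra); try (apply Rmax_r).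
  { apply (Ck_on_mono k u _ _ HJ U2). }
  { intros y z Hy Hz; apply U3; auto. }
  assert (G1 : incr_chart (itv a q) (fun x => w (f x))).
  { apply (incr_chart_comp _ f w (fun y => y < f q)); auto using open_lt.
    - apply incr_chart_mono with (itv a b); auto using open_itv. unfold itv; intros; lra.
    - intros y1 y2 y3; lra.
    - intros x Hx; unfold itv in Hx; apply Hf; lra. }
  assert (G2 : incr_chart (itv x2 d) (fun x => g x + beta)).
  { apply incr_chart_translate, incr_chart_mono with (itv c d); auto using open_itv.
    unfold itv, x2; intros; lra. }
  exists beta, (fun x => if Rlt_dec x x3 then w (f x) else g x + beta).
  split; [apply Rmax_l|]. split; [|split].
  - apply (incr_chart_glue_at a q _ x2 d _ x3); auto; unfold x2, x3 in *; try lra.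
    intros x Hx. rewrite Hw1, U1; auto; [split | left; apply Hf]; unfold itv; lra.
  - intros x Hx. destruct Rlt_dec; [|unfold x3 in *; lra]. apply Hw0.
    destruct (Req_dec x p) as [->|]; left; [|apply Rlt_trans with (f p)]; apply Hf; unfold x1 in *; lra.
  - intros x Hx. destruct Rlt_dec; [unfold x3 in *; lra | auto].
Qed.

Lemma incr_chart_extend_right a b f c d g p t M : incr_chart (itv a b) f -> incr_chart (itv c d) g ->
  a < p < b -> c < p < d -> p < t < d ->
  exists h, incr_chart (itv a d) h /\ (forall x, a < x <= p -> h x = f x) /\ M <= h t.
Proof.
  intros Gf Gg Hp Hp' Ht. set (q := (p + Rmin (Rmin b d) t) / 2).
  pose proof (Rmin_l (Rmin b d) t). pose proof (Rmin_r (Rmin b d) t).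
  pose proof (Rmin_l b d). pose proof (Rmin_r b d).
  assert (p < Rmin (Rmin b d) t) by (repeat apply Rmin_glb_lt; lra).
  destruct (incr_chart_glue a b f c d g p q (M - g t)) as [beta [h [Hb [Gh [Eh1 Eh2]]]]];
    auto; try (unfold q; lra).
  exists h. split; auto. split; auto. rewrite Eh2 by (unfold q; lra). lra.
Qed.

Lemma incr_chart_extend_left a b f c d g p t M : incr_chart (itv a b) f -> incr_chart (itv c d) g ->
  a < p < b -> c < p < d -> c < t < p ->
  exists h, incr_chart (itv c b) h /\ (forall x, p <= x < b -> h x = f x) /\ h t <= - M.
Proof.
  intros Gf Gg Hp Hp' Ht. set (p' := (Rmax (Rmax a c) t + p) / 2).
  pose proof (Rmax_l (Rmax a c) t). pose proof (Rmax_r (Rmax a c) t).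
  pose proof (Rmax_l a c). pose proof (Rmax_r a c).
  assert (Rmax (Rmax a c) t < p) by (repeat apply Rmax_lub_lt; lra).
  destruct (incr_chart_glue c d g a b f p' p (M + g t)) as [beta [h [Hb [Gh [Eh1 Eh2]]]]];
    auto; try (unfold p'; lra).
  exists (fun x => h x + - beta). split; [apply incr_chart_translate; auto|]. split.
  - intros x Hx. rewrite Eh2 by lra. ring.
  - rewrite Eh1 by (unfold p'; lra). lra.
Qed.

(* If some radius [r] were not reached, let [s] be the supremum of the reached radii:
   charts around [s] and [-s] extend a chart reaching nearly [s] beyond [s]. *)
Lemma incr_chart_large_itv r : exists a b f, a < - r /\ r < b /\ incr_chart (itv a b) f.
Proof.
  set (Q := fun r => exists a b f, a < - r /\ r < b /\ incr_chart (itv a b) f).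
  assert (Qdown : forall r r', Q r -> r' <= r -> Q r').
  { intros r1 r' [a [b [f [H1 [H2 H3]]]]] H. exists a, b, f; split; [lra | split; [lra | auto]]. }
  assert (Q0 : Q 0).
  { destruct (incr_chart_around 0) as [a [b [f [H1 H2]]]].
    exists a, b, f; split; [lra | split; [lra | auto]]. }
  apply NNPP. intro Hr. fold (Q r) in Hr.
  destruct (completeness (fun r => 0 <= r /\ Q r)) as [s [Hub Hlub]].
  { exists r. intros r1 [_ Hq]. destruct (Rle_or_lt r1 r); auto.
    exfalso; apply Hr, (Qdown r1); auto; lra. }
  { exists 0; split; [lra | auto]. }
  assert (Hs0 : 0 <= s) by (apply Hub; split; [lra | auto]).
  destruct (incr_chart_around s) as [a1 [b1 [f1 [Hab1 G1]]]].
  destruct (incr_chart_around (- s)) as [a2 [b2 [f2 [Hab2 G2]]]].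
  pose proof (Rmax_l a1 (- b2)). pose proof (Rmax_r a1 (- b2)). set (m := Rmax a1 (- b2)) in *.
  assert (Hm : m < s) by (unfold m; apply Rmax_lub_lt; lra).
  assert (Hr1 : exists r1, (0 <= r1 /\ Q r1) /\ m < r1).
  { apply NNPP. intro Hno. assert (s <= m); [|lra].
    apply Hlub. intros r1 Er. apply Rnot_lt_le. intro. apply Hno. exists r1; auto. }
  destruct Hr1 as [r1 [[Hr0 [a [b [f [Ha [Hb Gf]]]]]] Hmr]].
  assert (Hrs : r1 <= s) by (apply Hub; split; auto; exists a, b, f; auto).
  destruct (incr_chart_extend_right a b f a1 b1 f1 r1 ((r1 + b1) / 2) 0) as [h1 [Gh1 _]];
    auto; try lra.
  destruct (incr_chart_extend_left a b1 h1 a2 b2 f2 (- r1) ((a2 - r1) / 2) 0) as [h2 [Gh2 _]];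
    auto; try lra.
  set (eps := Rmin (b1 - s) (- s - a2) / 2).
  pose proof (Rmin_l (b1 - s) (- s - a2)). pose proof (Rmin_r (b1 - s) (- s - a2)).
  assert (0 < Rmin (b1 - s) (- s - a2)) by (apply Rmin_glb_lt; lra).
  assert (s + eps <= s); [|unfold eps in *; lra].
  apply Hub. split; [unfold eps; lra|].
  exists a2, b1, h2. unfold eps; split; [lra | split; [lra | auto]].
Qed.

(* The conditions on [h (INR n)] and [h (- INR n)] make the limit chart surjective. *)
Definition incr_chart_upto (n : nat) (h : R -> R) : Prop :=
  exists a b, a < - INR n /\ INR n < b /\ incr_chart (itv a b) h /\
    h 0 = 0 /\ INR n <= h (INR n) /\ h (- INR n) <= - INR n.

Lemma incr_chart_upto_0 : exists h, incr_chart_upto 0 h.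
Proof.
  destruct (incr_chart_large_itv 0) as [a [b [f [Ha [Hb G]]]]].
  exists (fun x => f x + - f 0), a, b. simpl. rewrite Ropp_0.
  split; [lra | split; [lra | split; [apply incr_chart_translate; auto | repeat split; lra]]].
Qed.

Lemma incr_chart_upto_S n h : incr_chart_upto n h ->
  exists h', incr_chart_upto (S n) h' /\ forall x, - INR n <= x <= INR n -> h' x = h x.
Proof.
  intros [a [b [Ha [Hb [G [H0 [Hp Hm]]]]]]]. pose proof (pos_INR n).
  destruct (incr_chart_large_itv (INR n + 2)) as [c [d [g [Hc [Hd Gg]]]]].
  destruct (incr_chart_extend_right a b h c d g (INR n) (INR n + 1) (INR n + 1))
    as [h1 [G1 [E1 M1]]]; auto; try lra.
  destruct (incr_chart_extend_left a d h1 c d g (- INR n) (- INR n - 1) (INR n + 1))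
    as [h2 [G2 [E2 M2]]]; auto; try lra.
  assert (E : forall x, - INR n <= x <= INR n -> h2 x = h x) by (intros; rewrite E2, E1; auto; lra).
  exists h2. split; auto. exists c, d. rewrite S_INR.
  split; [lra | split; [lra | split; [auto | split; [|split]]]].
  - rewrite E; auto. lra.
  - rewrite E2 by lra. auto.
  - replace (- (INR n + 1)) with (- INR n - 1) by ring. lra.
Qed.

Fixpoint incr_chart_seq (n : nat) : {h | incr_chart_upto n h} :=
  match n with
  | O => constructive_indefinite_description _ incr_chart_upto_0
  | S m =>
      let (h', Hh') := constructive_indefinite_description _
        (incr_chart_upto_S m _ (proj2_sig (incr_chart_seq m))) in
      exist _ h' (proj1 Hh')
  end.

Definition chart_seq (n : nat) : R -> R := proj1_sig (incr_chart_seq n).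

Lemma chart_seq_S n x : - INR n <= x <= INR n -> chart_seq (S n) x = chart_seq n x.
Proof.
  intro Hx. unfold chart_seq. simpl.
  destruct constructive_indefinite_description as [h' Hh']. apply Hh', Hx.
Qed.

Lemma chart_seq_stable n m x : (n <= m)%nat -> Rabs x <= INR n -> chart_seq m x = chart_seq n x.
Proof.
  intros Hnm Hx. induction Hnm; auto. rewrite chart_seq_S; auto.
  pose proof (le_INR _ _ Hnm). apply Rabs_le_between. lra.
Qed.

Definition nat_gt_abs (x : R) : nat :=
  proj1_sig (constructive_indefinite_description _ (INR_unbounded (Rabs x))).

Lemma nat_gt_abs_spec x : Rabs x < INR (nat_gt_abs x).
Proof. unfold nat_gt_abs; destruct constructive_indefinite_description; simpl; lra. Qed.

(* The charts [chart_seq n] agree on [[-n, n]]. *)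
Definition chart_lim (x : R) : R := chart_seq (nat_gt_abs x) x.

Lemma chart_lim_eq n x : Rabs x <= INR n -> chart_lim x = chart_seq n x.
Proof.
  intro Hx. unfold chart_lim. pose proof (nat_gt_abs_spec x).
  destruct (Nat.le_ge_cases n (nat_gt_abs x)); [|symmetry]; apply chart_seq_stable; auto; lra.
Qed.

Lemma incr_chart_global :
  exists H, incr_chart (fun _ => True) H /\ H 0 = 0 /\ (forall y, exists x, H x = y).
Proof.
  assert (Hs : forall n, exists a b, a < - INR n /\ INR n < b /\ incr_chart (itv a b) (chart_seq n)).
  { intro n. destruct (proj2_sig (incr_chart_seq n)) as [a [b [H1 [H2 [H3 _]]]]]. exists a, b; auto. }
  assert (G : incr_chart (fun _ => True) chart_lim).
  { apply incr_chart_local; [apply open_true | |].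
    - intros x y _ _ Hxy. pose proof (nat_gt_abs_spec x) as Hx; pose proof (nat_gt_abs_spec y) as Hy.
      set (n := Nat.max (nat_gt_abs x) (nat_gt_abs y)).
      assert (INR (nat_gt_abs x) <= INR n /\ INR (nat_gt_abs y) <= INR n) by (split; apply le_INR; lia).
      rewrite !(chart_lim_eq n) by lra.
      destruct (Hs n) as [a [b [Ha [Hb [_ [Hi _]]]]]].
      apply Rabs_def2 in Hx; apply Rabs_def2 in Hy. apply Hi; unfold itv; lra.
    - intros x _. set (n := nat_gt_abs x). pose proof (nat_gt_abs_spec x) as Hn. fold n in Hn.
      destruct (Hs n) as [a [b [Ha [Hb Gh]]]]. apply Rabs_def2 in Hn.
      exists (itv (- INR n) (INR n)), (chart_seq n). split; [apply open_itv|].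
      split; [unfold itv; lra | split; [auto | split]].
      + apply incr_chart_mono with (itv a b); auto using open_itv. unfold itv; intros; lra.
      + intros z Hz. apply chart_lim_eq. unfold itv in Hz. apply Rabs_le; lra. }
  exists chart_lim. split; [auto | split].
  - rewrite (chart_lim_eq 0) by (rewrite Rabs_R0; simpl; lra).
    destruct (proj2_sig (incr_chart_seq 0)) as [_ [_ [_ [_ [_ [H0 _]]]]]]. auto.
  - intros y. destruct (INR_unbounded (Rabs y)) as [n Hn]. apply Rabs_def2 in Hn.
    destruct (proj2_sig (incr_chart_seq n)) as [_ [_ [_ [_ [_ [_ [Hp Hm]]]]]]].
    fold (chart_seq n) in Hp, Hm.
    pose proof (pos_INR n).
    rewrite <- (chart_lim_eq n) in Hp, Hm by (try rewrite Rabs_Ropp; rewrite Rabs_right; lra).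
    destruct (IVT_le chart_lim (- INR n) (INR n) y) as [x [_ Ex]]; try lra.
    + intros; apply G; auto.
    + exists x; auto.
Qed.

End AtlasOnR.

(** * The line with two origins *)

Definition ptV (x : R) : L := match Req_dec_T x 0 with left _ => o' | right _ => pt x end.

Lemma ptV_neq0 x : x <> 0 -> ptV x = pt x.
Proof. intro; unfold ptV; destruct Req_dec_T; [contradiction | auto]. Qed.

Lemma ptV_0 : ptV 0 = o'.
Proof. unfold ptV; destruct Req_dec_T; [auto | congruence]. Qed.

Lemma U_L_pt p : U_L p <-> exists x, p = pt x.
Proof.
  unfold U_L. destruct p as [x|]; split; [eauto | discriminate | tauto | intros [x E]; discriminate].
Qed.

Lemma V_L_ptV p : V_L p <-> exists x, p = ptV x.
Proof.
  unfold V_L. split.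
  - destruct p as [x|]; intro H; [exists x; rewrite ptV_neq0 | exists 0; rewrite ptV_0]; auto.
    intros ->; auto.
  - intros [x ->]. destruct (Req_dec x 0) as [->|]; [rewrite ptV_0 | rewrite ptV_neq0 by auto];
      [discriminate | intro E; injection E; auto].
Qed.

Lemma openL_ext (A B : L -> Prop) : (forall p, A p <-> B p) -> openL A -> openL B.
Proof.
  intros He [H1 H2]. split.
  - apply (open_ext _ _ (fun x => He (pt x)) H1).
  - apply (open_ext (fun x => (x = 0 /\ A o') \/ (x <> 0 /\ A (pt x)))); auto.
    intro x. rewrite (He o'), (He (pt x)). tauto.
Qed.

Definition open_embedding (e : R -> L) : Prop :=
  (forall a b, e a = e b -> a = b) /\
  (forall A : L -> Prop, openL A -> open (fun x => A (e x))) /\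
  (forall O : R -> Prop, open O -> openL (fun p => exists x, O x /\ p = e x)).

Lemma open_embedding_pt : open_embedding pt.
Proof.
  split; [intros a b H; injection H; auto | split; [intros A [H _]; auto |]].
  intros O HO. split.
  - apply (open_ext O); auto. intro x; split; [eauto | intros [y [Hy E]]; injection E; intros ->; auto].
  - apply (open_ext (fun x => x <> 0 /\ O x)); [|apply open_and; auto using open_neq0].
    intro x; split; [intros [Hx H]; right; eauto|].
    intros [[_ [y [_ E]]] | [Hx [y [Hy E]]]]; [discriminate | injection E; intros ->; auto].
Qed.

Lemma open_embedding_ptV : open_embedding ptV.
Proof.
  assert (Hpt : forall x y, ptV x = pt y -> x = y /\ y <> 0).
  { intros x y E. destruct (Req_dec x 0) as [->|]; [rewrite ptV_0 in E; discriminate|].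
    rewrite ptV_neq0 in E by auto. injection E; intros ->; auto. }
  assert (Ho : forall x, ptV x = o' -> x = 0).
  { intros x E. destruct (Req_dec x 0); auto. rewrite ptV_neq0 in E by auto; discriminate. }
  split; [|split].
  - intros a b H. destruct (Req_dec b 0) as [->|]; [rewrite ptV_0 in H; auto|].
    rewrite (ptV_neq0 b) in H by auto. apply Hpt in H; tauto.
  - intros A [_ H]. refine (open_ext _ _ _ H). intro x.
    destruct (Req_dec x 0) as [->|]; [rewrite ptV_0 | rewrite ptV_neq0 by auto]; intuition.
  - intros O HO. split.
    + apply (open_ext (fun x => x <> 0 /\ O x)); [|apply open_and; auto using open_neq0].
      intro x; split; [intros [Hx H]; exists x; rewrite ptV_neq0; auto|].
      intros [y [Hy E]]. symmetry in E. apply Hpt in E. destruct E as [-> ?]; auto.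
    + apply (open_ext O); auto. intro x; split.
      * intro H. destruct (Req_dec x 0) as [->|]; [left | right]; split; auto;
          [exists 0; rewrite ptV_0 | exists x; rewrite ptV_neq0]; auto.
      * intros [[-> [y [Hy E]]] | [Hx [y [Hy E]]]].
        -- symmetry in E. apply Ho in E. subst; auto.
        -- symmetry in E. apply Hpt in E. destruct E as [-> _]; auto.
Qed.

Lemma continuous_of_open_preimage (D : R -> Prop) (f : R -> R) x :
  (forall W : R -> Prop, open W -> open (fun z => D z /\ W (f z))) -> D x -> continuous f x.
Proof.
  intros H Hx P [eps HP]. change (locally x (fun z => P (f z))).
  assert (HW : open (fun y => Rabs (y - f x) < eps)).
  { apply open_Rabs. intros y Hy. exists (eps - Rabs (y - f x)). split; [lra|]. intros z Hz.
    pose proof (Rabs_triang (z - y) (y - f x)). replace (z - y + (y - f x)) with (z - f x) in * by ring.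
    lra. }
  apply (filter_imp (fun z => D z /\ Rabs (f z - f x) < eps)); [intros z [_ Hz]; apply HP, Hz|].
  apply (H _ HW x). split; auto. rewrite Rminus_diag, Rabs_R0. apply cond_pos.
Qed.

Lemma is_chartR_of_chart e c : open_embedding e -> is_chart c ->
  is_chartR (fun x => cdom c (e x)) (fun x => cmap c (e x)).
Proof.
  intros [E1 [E2 E3]] [C1 [C2 [C3 [C4 C5]]]]. split; [apply E2; auto | split; [|split]].
  - intros x Hx. apply continuous_of_open_preimage with (fun x => cdom c (e x)); auto.
    intros W HW. apply (E2 (fun p => cdom c p /\ W (cmap c p))); auto.
  - intros a b Ha Hb H. apply E1, C2; auto.
  - intros O HO Ho. apply (open_ext (cimage (cmap c) (fun p => exists x, O x /\ p = e x))).
    + intro y; split; [intros [p [[x [Hx ->]] <-]]; exists x; auto|].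
      intros [x [Hx <-]]. exists (e x); split; eauto.
    + apply C5; [apply E3; auto | intros p [x [Hx ->]]; auto].
Qed.

Lemma is_chart_of_embedding e (Dom : L -> Prop) m h : open_embedding e ->
  (forall p, Dom p <-> exists x, p = e x) -> (forall x, m (e x) = h x) ->
  is_chartR (fun _ => True) h -> (forall y, exists x, h x = y) -> is_chart (mkchart Dom m).
Proof.
  intros [E1 [E2 E3]] HD Hm [_ [Hc [Hi Ho]]] Hs. unfold is_chart; simpl.
  split; [|split; [|split; [|split]]].
  - apply (openL_ext (fun p => exists x, True /\ p = e x)); [|apply E3, open_true].
    intro p. rewrite HD. firstorder.
  - intros p q Hp Hq E. apply HD in Hp, Hq. destruct Hp as [x ->], Hq as [y ->].
    rewrite !Hm in E. f_equal. apply Hi; auto.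
  - apply (open_ext (fun _ => True)); [|apply open_true]. intro y; split; auto.
    intros _. destruct (Hs y) as [x <-]. exists (e x). rewrite Hm, HD; eauto.
  - intros W HW. apply (openL_ext (fun p => exists x, W (h x) /\ p = e x)).
    + intro p. split; [intros [x [Hx ->]]; rewrite HD, Hm; eauto|].
      intros [Hp Hw]. apply HD in Hp. destruct Hp as [x ->]. rewrite Hm in Hw; eauto.
    + apply E3, (open_comp h W); auto. intros x _. apply Hc; auto.
  - intros A0 HA0 Hsub. apply (open_ext (image h (fun x => A0 (e x)))); [|apply Ho; auto].
    intro y; split; [intros [x [Hx <-]]; exists (e x); rewrite Hm; auto|].
    intros [p [Hp <-]]. destruct (proj1 (HD p) (Hsub p Hp)) as [x ->]. rewrite Hm. exists x; auto.
Qed.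

Lemma trans_Ck_of_trans_CkR k c1 c2 e D1 f1 D2 f2 :
  (forall p, cdom c1 p -> cdom c2 p -> exists x, p = e x) ->
  (forall x, cdom c1 (e x) -> cdom c2 (e x) ->
     D1 x /\ D2 x /\ f1 x = cmap c1 (e x) /\ f2 x = cmap c2 (e x)) ->
  trans_CkR k D1 f1 D2 f2 -> trans_Ck k c1 c2.
Proof.
  intros He Hx [g [G1 G2]]. exists g. split.
  - intros p H1 H2. destruct (He p H1 H2) as [x ->]. destruct (Hx x H1 H2) as [? [? [<- <-]]]; auto.
  - eapply Ck_on_mono; [|exact G2]. intros y [p [[H1 H2] <-]].
    destruct (He p H1 H2) as [x ->]. destruct (Hx x H1 H2) as [? [? [<- _]]]. exists x; auto.
Qed.

Definition trace (e : R -> L) (A : chart -> Prop) (D : R -> Prop) (f : R -> R) : Prop :=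
  exists c, A c /\ D = (fun x => cdom c (e x)) /\ f = (fun x => cmap c (e x)).

(* The minimal atlas is [hU o coord] on [U] and [hV o coord] on [V]. *)
Definition coord (p : L) : R := match p with pt x => x | o' => 0 end.

Lemma coord_ptV x : coord (ptV x) = x.
Proof. destruct (Req_dec x 0) as [->|]; [rewrite ptV_0 | rewrite ptV_neq0]; auto. Qed.

Section TwoOrigins.

Variable k : smoothness.
Variable A : chart -> Prop.
Hypothesis HA : Ck_atlas k A.

Lemma trace_chart e : open_embedding e -> forall D f, trace e A D f -> is_chartR D f.
Proof. intros He D f [c [Hc [-> ->]]]. apply is_chartR_of_chart; auto. apply HA; auto. Qed.

Lemma trace_cover e : forall x, exists D f, trace e A D f /\ D x.
Proof.
  intro x. destruct HA as [_ [Hcov _]]. destruct (Hcov (e x)) as [c [Hc Hd]].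
  exists (fun x => cdom c (e x)), (fun x => cmap c (e x)). split; auto. exists c; auto.
Qed.

Lemma trace_trans e : forall D1 f1 D2 f2, trace e A D1 f1 -> trace e A D2 f2 -> trans_CkR k D1 f1 D2 f2.
Proof.
  intros D1 f1 D2 f2 [c1 [H1 [-> ->]]] [c2 [H2 [-> ->]]].
  destruct HA as [_ [_ Hcomp]]. destruct (Hcomp c1 c2 H1 H2) as [[g [G1 G2]] _].
  exists g; split; [intros; apply G1; auto|].
  eapply Ck_on_mono; [|exact G2]. intros y [x [[Ha Hb] <-]]. exists (e x); auto.
Qed.

Lemma trace_incr_chart_compatible e (Dom : L -> Prop) m h c :
  (forall p, Dom p <-> exists x, p = e x) -> (forall x, m (e x) = h x) ->
  incr_chart k (trace e A) (fun _ => True) h -> A c -> Ck_compatible k (mkchart Dom m) c.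
Proof.
  intros HD Hm [_ [_ [_ C]]] Hc.
  destruct (C (fun x => cdom c (e x)) (fun x => cmap c (e x))) as [T1 T2]; [exists c; auto|].
  split.
  - refine (trans_Ck_of_trans_CkR k _ c e _ _ _ _ _ _ T1); [intros p Hp _; apply HD; auto|].
    intros x _ Hx; simpl; rewrite Hm; auto.
  - refine (trans_Ck_of_trans_CkR k c _ e _ _ _ _ _ _ T2); [intros p _ Hp; apply HD; auto|].
    intros x Hx _; simpl; rewrite Hm; auto.
Qed.

Lemma trans_CkR_nonzero e1 e2 h1 h2 : open_embedding e1 -> open_embedding e2 ->
  (forall x, x <> 0 -> e1 x = e2 x) ->
  incr_chart k (trace e1 A) (fun _ => True) h1 -> incr_chart k (trace e2 A) (fun _ => True) h2 ->
  trans_CkR k (fun x => x <> 0) h1 (fun x => x <> 0) h2.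
Proof.
  intros He1 He2 He G1 G2.
  assert (C1 := proj2 (proj2 (proj2 G1))). assert (C2 := proj2 (proj2 (proj2 G2))).
  apply (trans_CkR_via k _ h1 _ h2 (fun D f => exists c, A c /\
    D = (fun x => x <> 0 /\ cdom c (e1 x)) /\ f = (fun x => cmap c (e1 x)))); auto using open_neq0.
  - apply is_chartR_mono with (fun _ => True); auto using open_neq0.
    apply (incr_chart_is_chartR k (trace e1 A)); auto.
  - intros x Hx _. destruct (trace_cover e1 x) as [D [f [[c [Hc [-> ->]]] Hd]]].
    exists (fun x => x <> 0 /\ cdom c (e1 x)), (fun x => cmap c (e1 x)).
    split; [exists c|]; simpl; auto.
  - intros D f [c [Hc [-> ->]]]. split; [|split].
    + apply is_chartR_mono with (fun x => cdom c (e1 x)).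
      * apply is_chartR_of_chart; auto. apply HA; auto.
      * apply open_and; [apply open_neq0 | apply He1, HA; auto].
      * intros x [_ H]; auto.
    + destruct (C1 (fun x => cdom c (e1 x)) (fun x => cmap c (e1 x))) as [T _]; [exists c; auto|].
      apply (trans_CkR_mono k _ _ _ _ _ _ _ _ T). intros x H1 [H2 H3]. repeat split; auto.
    + destruct (C2 (fun x => cdom c (e2 x)) (fun x => cmap c (e2 x))) as [_ T]; [exists c; auto|].
      apply (trans_CkR_mono k _ _ _ _ _ _ _ _ T).
      intros x [H1 H2] H3. rewrite <- He by auto. repeat split; auto.
Qed.

End TwoOrigins.

Lemma trans_Ck_refl k c : trans_Ck k c c.
Proof. exists (fun y => y). split; auto. apply Ck_on_id. Qed.

Lemma Ck_atlas_union_r k (A B : chart -> Prop) : Ck_atlas k (atlas_union A B) ->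
  (forall p, exists c, B c /\ cdom c p) -> Ck_atlas k B.
Proof.
  intros [H1 [_ H3]] Hcov. split; [|split]; auto.
  - intros c Hc; apply H1; right; auto.
  - intros c1 c2 Hc1 Hc2; apply H3; right; auto.
Qed.

Lemma two_charts_cover phi psi p : exists c, two_charts phi psi c /\ cdom c p.
Proof.
  destruct p as [x|]; [exists (mkchart U_L phi) | exists (mkchart V_L psi)];
    split; simpl; try (left; reflexivity); try (right; reflexivity); discriminate.
Qed.

Section MinimalAtlas.

Variable k : smoothness.
Hypothesis hk : k <> fin 0.
Variable A : chart -> Prop.
Hypothesis HA : Ck_atlas k A.
Variables hU hV : R -> R.
Hypothesis GU : incr_chart k (trace pt A) (fun _ => True) hU.
Hypothesis GV : incr_chart k (trace ptV A) (fun _ => True) hV.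
Hypothesis SU : forall y, exists x, hU x = y.
Hypothesis SV : forall y, exists x, hV x = y.

Let chartU := mkchart U_L (fun p => hU (coord p)).
Let chartV := mkchart V_L (fun p => hV (coord p)).

Lemma trans_CkR_UV : trans_CkR k (fun x => x <> 0) hU (fun x => x <> 0) hV.
Proof.
  apply (trans_CkR_nonzero k A HA pt ptV); auto using open_embedding_pt, open_embedding_ptV.
  intros; rewrite ptV_neq0; auto.
Qed.

Lemma trans_CkR_VU : trans_CkR k (fun x => x <> 0) hV (fun x => x <> 0) hU.
Proof.
  apply (trans_CkR_nonzero k A HA ptV pt); auto using open_embedding_pt, open_embedding_ptV.
  intros; rewrite ptV_neq0; auto.
Qed.

Lemma U_inter_V_pt p : U_L p -> V_L p -> exists x, x <> 0 /\ p = pt x.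
Proof.
  destruct p as [x|]; intros HU HV; [|exfalso; apply HU; auto].
  exists x; split; auto. intros ->; auto.
Qed.

Lemma trans_Ck_UV : trans_Ck k chartU chartV.
Proof.
  refine (trans_Ck_of_trans_CkR k _ _ pt _ _ _ _ _ _ trans_CkR_UV).
  - intros p H1 H2. destruct (U_inter_V_pt p H1 H2) as [x [_ ->]]; eauto.
  - intros x H1 H2. destruct (U_inter_V_pt _ H1 H2) as [y [Hy E]]. injection E; intros ->. auto.
Qed.

Lemma trans_Ck_VU : trans_Ck k chartV chartU.
Proof.
  refine (trans_Ck_of_trans_CkR k _ _ pt _ _ _ _ _ _ trans_CkR_VU).
  - intros p H1 H2. destruct (U_inter_V_pt p H2 H1) as [x [_ ->]]; eauto.
  - intros x H1 H2. destruct (U_inter_V_pt _ H2 H1) as [y [Hy E]]. injection E; intros ->. auto.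
Qed.

Lemma Ck_atlas_union_UV :
  Ck_atlas k (atlas_union A (two_charts (fun p => hU (coord p)) (fun p => hV (coord p)))).
Proof.
  assert (CU : is_chart chartU).
  { apply (is_chart_of_embedding pt U_L _ hU open_embedding_pt U_L_pt); auto.
    apply (incr_chart_is_chartR k (trace pt A)); auto. }
  assert (CV : is_chart chartV).
  { apply (is_chart_of_embedding ptV V_L _ hV open_embedding_ptV V_L_ptV); auto.
    - intro x; simpl; rewrite coord_ptV; auto.
    - apply (incr_chart_is_chartR k (trace ptV A)); auto. }
  assert (KU : forall c, A c -> Ck_compatible k chartU c)
    by (intros; apply (trace_incr_chart_compatible k A pt U_L _ hU); auto using U_L_pt).
  assert (KV : forall c, A c -> Ck_compatible k chartV c).
  { intros; apply (trace_incr_chart_compatible k A ptV V_L _ hV); auto using V_L_ptV.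
    intro x; simpl; rewrite coord_ptV; auto. }
  destruct HA as [H1 [H2 H3]]. split; [|split].
  - intros c [Hc | [-> | ->]]; auto.
  - intro p. destruct (H2 p) as [c [Hc Hd]]. exists c; split; [left|]; auto.
  - assert (Hsym : forall c c', Ck_compatible k c c' -> Ck_compatible k c' c)
      by (intros c c' []; split; auto).
    intros c1 c2 [Hc1 | [-> | ->]] [Hc2 | [-> | ->]];
      first [ split; apply trans_Ck_refl | split; [apply trans_Ck_UV | apply trans_Ck_VU]
            | split; [apply trans_Ck_VU | apply trans_Ck_UV] | auto ].
Qed.

Hypothesis HU0 : hU 0 = 0.

Lemma orientable_UV : orientable (fun p => hU (coord p)) (fun p => hV (coord p)).
Proof.
  destruct trans_CkR_UV as [g [G1 G2]]. destruct trans_CkR_VU as [g' [G1' G2']].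
  exists g. split.
  - intros p H1 H2. destruct (U_inter_V_pt p H1 H2) as [x [Hx ->]]. apply G1; auto.
  - intros y Hy. destruct (SU y) as [x <-].
    assert (Hx : x <> 0) by (intros ->; auto).
    assert (Hy' : image hU (fun x => x <> 0 /\ x <> 0) (hU x)) by (exists x; auto).
    exists (Derive g (hU x)). split; [apply (Ck_on_is_derive k g _ hk G2); auto|].
    apply (transition_Derive_pos k (fun x => x <> 0 /\ x <> 0) hU hV g g'); auto.
    + apply (is_chartR_open_image (fun _ => True)); [| auto | apply open_and; apply open_neq0].
      apply (incr_chart_is_chartR k (trace pt A)); auto.
    + intros a b [] []; apply GU; auto.
    + intros a b [] []; apply GV; auto.
    + intros z [Hz _]; auto.
    + intros z [Hz _]; auto.
Qed.

End MinimalAtlas.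

Theorem lemma5p9 (k : smoothness) (hk : k <> fin 0)
  (S : (chart -> Prop) -> Prop) (hS : Ck_structure k S) :
  exists phi psi : L -> R,
    minimal_atlas k phi psi /\ orientable phi psi /\ S (two_charts phi psi).
Proof.
  destruct hS as [A [HA HS]].
  destruct (incr_chart_global k hk (trace pt A) (trace_chart k A HA pt open_embedding_pt)
    (trace_cover k A HA pt) (trace_trans k A HA pt)) as [hU [GU [HU0 SU]]].
  destruct (incr_chart_global k hk (trace ptV A) (trace_chart k A HA ptV open_embedding_ptV)
    (trace_cover k A HA ptV) (trace_trans k A HA ptV)) as [hV [GV [HV0 SV]]].
  set (phi := fun p => hU (coord p)). set (psi := fun p => hV (coord p)).
  assert (Hunion := Ck_atlas_union_UV k A HA hU hV GU GV SU SV).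
  assert (Htwo : Ck_atlas k (two_charts phi psi)).
  { apply (Ck_atlas_union_r k A); auto using two_charts_cover. }
  exists phi, psi. split; [|split].
  - split; [auto | split; [|split; [|split]]]; unfold phi, psi; simpl; auto.
    + intro y. destruct (SU y) as [x <-]. exists (pt x). split; [discriminate | auto].
    + intro y. destruct (SV y) as [x <-]. exists (ptV x). rewrite coord_ptV, V_L_ptV; eauto.
  - apply (orientable_UV k hk A HA hU hV GU GV SU HU0).
  - apply HS; auto.
Qed.
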